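(* Let $\alpha,\beta\in(0,1)$ with $\alpha+\beta>1$, and let $v\in\mathcal{C}^\alpha(L(\mathbb{R}^d,\mathbb{R}^n))$, $w\in\mathcal{C}^\beta(\mathbb{R}^d)$. Then the integral \[ I(v,dw):=\sum_{p,q\ge-1}\int_0^\cdot\Delta_pv(s)\,d\Delta_qw(s)=\lim_{N\to\infty}\int_0^\cdot S_Nv(s)\,d(S_Nw)(s) \] exists (uniform limit), satisfies $I(v,dw)=L(v,w)+S(v,w)+\pi_<(v,w)\in\mathcal{C}^\beta(\mathbb{R}^n)$, $\|I(v,dw)\|_\beta\lesssim\|v\|_\alpha\|w\|_\beta$, and \[ \|I(v,dw)-\pi_<(v,w)\|_{\alpha+\beta}\lesssim\|v\|_\alpha\|w\|_\beta. \]
   Context: Index set: pairs $(p,m)$ with either $p=-1,m=0$, or $p\in\mathbb{N}=\{0,1,2,\dots\}$ and $0\le m\le 2^p$. For $p\in\mathbb{N}$, $1\le m\le 2^p$ set $t^0_{pm}=(m-1)2^{-p}$, $t^1_{pm}=(2m-1)2^{-p-1}$, $t^2_{pm}=m2^{-p}$. Rescaled Haar functions: for $p\in\mathbb{N}$, $1\le m\le 2^p$, $\chi_{pm}=2^p$ on $[t^0_{pm},t^1_{pm})$, $=-2^p$ on $[t^1_{pm},t^2_{pm})$, $=0$ elsewhere; $\chi_{00}\equiv1$; $\chi_{p0}\equiv0$ for $p\ge1$. Rescaled Schauder functions: $\varphi_{pm}(t)=\int_0^t\chi_{pm}(s)\,ds$ for $p\in\mathbb{N}$, and $\varphi_{-10}\equiv1$.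 For continuous $f:[0,1]\to E$ ($E$ a finite-dimensional normed space), coefficients: $f_{-10}=f(0)$, $f_{00}=f(1)-f(0)$, $f_{p0}=0$ for $p\ge1$, $f_{pm}=2f(t^1_{pm})-f(t^0_{pm})-f(t^2_{pm})$ for $p\in\mathbb{N},m\ge1$. Schauder blocks: $\Delta_pf=\sum_{m=0}^{2^p}f_{pm}\varphi_{pm}$ ($p\ge-1$), $S_pf=\sum_{q=-1}^p\Delta_qf$ (piecewise linear). For $\alpha>0$, $\|f\|_\alpha:=\sup_{p,m}2^{p\alpha}|f_{pm}|$ and $\mathcal{C}^\alpha(E):=\{f\in C([0,1],E):\|f\|_\alpha<\infty\}$. For $g$ piecewise linear, $\int_0^tf\,dg:=\int_0^tf(s)g'(s)\,ds$, $\int_0^tdg\,f:=\int_0^tg'(s)f(s)\,ds$. Paraproduct $\pi_<(v,w):=\sum_{p\ge0}S_{p-1}v\,\Delta_pw$. Lévy area $L(v,w):=\sum_{p\ge0}\big(\int_0^\cdot\Delta_pv\,d(S_{p-1}w)-\int_0^\cdot d(S_{p-1}v)\,\Delta_pw\big)$. Symmetric part $S(v,w):=\sum_{m,n\in\{0,1\}}v_{0m}w_{0n}\int_0^\cdot\varphi_{0m}\varphi_{0n}'\,ds+\frac12\sum_{p\ge1}\Delta_pv\,\Delta_pw$. $\lesssim$ hides a constant depending only on $\alpha,\beta$. *)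

From Stdlib Require Import Reals Lra Lia ClassicalEpsilon.
Open Scope R_scope.

Fixpoint fsum (k : nat) (f : nat -> R) : R :=
  match k with O => 0 | S k' => fsum k' f + f k' end.
(* fmax k f = max(0, f 0, ..., f (k-1)) ; used only for nonnegative quantities *)
Fixpoint fmax (k : nat) (f : nat -> R) : R :=
  match k with O => 0 | S k' => Rmax (fmax k' f) (f k') end.

(* ---------- Riemann integral (value of RiemannInt if integrable) ---------- *)
Definition Rint (f : R -> R) (a b : R) : R :=
  epsilon (inhabits 0) (fun I => exists pr : Riemann_integrable f a b, RiemannInt pr = I).

Definition t0 (p m : nat) : R := INR (m - 1) / 2 ^ p.
Definition t1 (p m : nat) : R := (2 * INR m - 1) / 2 ^ (S p).
Definition t2 (p m : nat) : R := INR m / 2 ^ p.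

(* rescaled Haar functions chi_{pm}, p >= 0 *)
Definition chi (p m : nat) (t : R) : R :=
  match m with
  | O => match p with O => 1 | _ => 0 end
  | _ => if Rle_dec (t0 p m) t then
           if Rlt_dec t (t1 p m) then 2 ^ p
           else if Rlt_dec t (t2 p m) then - 2 ^ p else 0
         else 0
  end.

(* rescaled Schauder functions phi_{pm}(t) = int_0^t chi_{pm}, p >= 0,
   written out in closed form *)
Definition phi (p m : nat) (t : R) : R :=
  match m with
  | O => match p with O => t | _ => 0 end
  | _ => if Rle_dec (t0 p m) t then
           if Rlt_dec t (t1 p m) then 2 ^ p * (t - t0 p m)
           else if Rlt_dec t (t2 p m) then 2 ^ p * (t2 p m - t) else 0
         else 0
  end.

(* Schauder coefficients f_{pm}, p >= 0 (f_{-1,0} = f 0 handled separately) *)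
Definition coef (f : R -> R) (p m : nat) : R :=
  match m with
  | O => match p with O => f 1 - f 0 | _ => 0 end
  | _ => 2 * f (t1 p m) - f (t0 p m) - f (t2 p m)
  end.

Definition Delta (f : R -> R) (p : nat) (t : R) : R :=
  fsum (S (2 ^ p)) (fun m => coef f p m * phi p m t).
Definition dDelta (f : R -> R) (p : nat) (t : R) : R :=
  fsum (S (2 ^ p)) (fun m => coef f p m * chi p m t).

(* SS f k = S_{k-1} f  (so SS f 0 = Delta_{-1} f = f 0), and its a.e. derivative *)
Fixpoint SS (f : R -> R) (k : nat) (t : R) : R :=
  match k with O => f 0 | S k' => SS f k' t + Delta f k' t end.
Fixpoint dSS (f : R -> R) (k : nat) (t : R) : R :=
  match k with O => 0 | S k' => dSS f k' t + dDelta f k' t end.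

(* ---------- vector / matrix valued functions ----------
   vector-valued (R^n): f : nat -> R -> R, component i < n;
   matrix-valued (L(R^d,R^n)): v : nat -> nat -> R -> R, entry (i,j), i<n, j<d.
   Norms: sup norm on R^n, R^d; induced operator norm on L(R^d,R^n)
   (max over rows of the absolute row sums). *)

Definition vnorm (n : nat) (x : nat -> R) : R := fmax n (fun i => Rabs (x i)).
Definition mnorm (n d : nat) (A : nat -> nat -> R) : R :=
  fmax n (fun i => fsum d (fun j => Rabs (A i j))).

Definition cont01 (f : R -> R) : Prop :=
  forall t, 0 <= t <= 1 -> forall eps, 0 < eps -> exists del, 0 < del /\
    forall s, 0 <= s <= 1 -> Rabs (s - t) < del -> Rabs (f s - f t) < eps.
Definition vec_cont01 (n : nat) (f : nat -> R -> R) : Prop :=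
  forall i, (i < n)%nat -> cont01 (f i).
Definition mat_cont01 (n d : nat) (v : nat -> nat -> R -> R) : Prop :=
  forall i j, (i < n)%nat -> (j < d)%nat -> cont01 (v i j).

(* K bounds the quantity sup_{p,m} 2^{p a} |f_{pm}|, given the norms
   cm1 = |f_{-1,0}| and c p m = |f_{pm}| (p >= 0, 0 <= m <= 2^p). *)
Definition holder_bound (a K : R) (cm1 : R) (c : nat -> nat -> R) : Prop :=
  Rpower 2 (- a) * cm1 <= K /\
  forall p m, (m <= 2 ^ p)%nat -> Rpower 2 (INR p * a) * c p m <= K.

Definition vec_holder (n : nat) (a : R) (f : nat -> R -> R) (K : R) : Prop :=
  holder_bound a K (vnorm n (fun i => f i 0))
    (fun p m => vnorm n (fun i => coef (f i) p m)).
Definition mat_holder (n d : nat) (a : R) (v : nat -> nat -> R -> R) (K : R) : Prop :=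
  holder_bound a K (mnorm n d (fun i j => v i j 0))
    (fun p m => mnorm n d (fun i j => coef (v i j) p m)).

Definition Iapprox (d : nat) (v : nat -> nat -> R -> R) (w : nat -> R -> R)
  (N : nat) (i : nat) (t : R) : R :=
  fsum d (fun j => Rint (fun s => SS (v i j) (S N) s * dSS (w j) (S N) s) 0 t).

(* partial sums over p = 0..P-1 of the Levy area L(v,w) *)
Definition Lpart (d : nat) (v : nat -> nat -> R -> R) (w : nat -> R -> R)
  (P : nat) (i : nat) (t : R) : R :=
  fsum P (fun p => fsum d (fun j =>
     Rint (fun s => Delta (v i j) p s * dSS (w j) p s) 0 t
   - Rint (fun s => dSS (v i j) p s * Delta (w j) p s) 0 t)).

(* partial sums (p = 1..P in the series) of the symmetric part S(v,w) *)
Definition Spart (d : nat) (v : nat -> nat -> R -> R) (w : nat -> R -> R)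
  (P : nat) (i : nat) (t : R) : R :=
  fsum d (fun j => fsum 2 (fun m => fsum 2 (fun k =>
      coef (v i j) 0 m * coef (w j) 0 k * Rint (fun s => phi 0 m s * chi 0 k s) 0 t)))
  + / 2 * fsum P (fun p => fsum d (fun j => Delta (v i j) (S p) t * Delta (w j) (S p) t)).

(* partial sums over p = 0..P-1 of the paraproduct pi_<(v,w) *)
Definition Ppart (d : nat) (v : nat -> nat -> R -> R) (w : nat -> R -> R)
  (P : nat) (i : nat) (t : R) : R :=
  fsum P (fun p => fsum d (fun j => SS (v i j) p t * Delta (w j) p t)).

Definition unif_cv01 (n : nat) (F : nat -> nat -> R -> R) (G : nat -> R -> R) : Prop :=
  forall eps, 0 < eps -> exists N0, forall N, (N0 <= N)%nat ->
    forall i t, (i < n)%nat -> 0 <= t <= 1 -> Rabs (F N i t - G i t) < eps.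
Definition pw_cv01 (n : nat) (F : nat -> nat -> R -> R) (G : nat -> R -> R) : Prop :=
  forall i t, (i < n)%nat -> 0 <= t <= 1 -> Un_cv (fun N => F N i t) (G i t).

(* All approximations only involve S_N v and S_N w, which are piecewise affine on the dyadic
   grid of mesh 2^-(N+1).  Writing S_{N+1} = S_N + Δ_N in both factors and integrating the cross
   term by parts gives the exact identity I_N = L_{N+1} + S_N + π_{N+1} between partial sums; on
   each level p ≥ 1 the Schauder functions have disjoint supports, so ∫ Δ_p v dΔ_p w is
   ½ Δ_p v Δ_p w.  The increments of the three partial sums decay like 2^(P(1-α-β)),
   2^(-P(α+β)) and 2^(-Pβ), hence they converge uniformly.

   For the Hölder bounds, on a dyadic interval [x, y] of level r the limit I differs from the
   trapezoidal sum T(x, y) = ½ (v x + v y) (w y - w x) by O(2^(-r(α+β))): the approximations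
   agree with T on their own grid, and halving an interval costs a product of two increments,
   of size 2^(-(r+1)(α+β)), which is summable because α + β > 1.  This gives the β-regularity
   of I.  For I - π_<(v, w), the second difference at level q splits into two such trapezoid
   defects, products of adjacent increments of v and w, and the second difference of the first
   q terms of the paraproduct, all of order 2^(-q(α+β)). *)

From Stdlib Require Import Reals Lra Lia ClassicalEpsilon.
From Coquelicot Require Import Coquelicot.
Open Scope R_scope.

Ltac destruct_Rabs := unfold Rabs in *; repeat match goal with
  | |- context [Rcase_abs ?x] => destruct (Rcase_abs x)
  | H : context [Rcase_abs ?x] |- _ => destruct (Rcase_abs x)
  end; try lra.

Lemma Rabs_sub_le a b : Rabs (a - b) <= Rabs a + Rabs b.
Proof. destruct_Rabs. Qed.

Lemma fsum_ext k f g : (forall m, (m < k)%nat -> f m = g m) -> fsum k f = fsum k g.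
Proof. induction k; intros H; simpl; auto. rewrite IHk by (intros; apply H; lia). rewrite H by lia. auto. Qed.

Lemma fsum_plus k f g : fsum k (fun m => f m + g m) = fsum k f + fsum k g.
Proof. induction k; simpl; [lra|]. rewrite IHk; lra. Qed.

Lemma fsum_scal k c f : fsum k (fun m => c * f m) = c * fsum k f.
Proof. induction k; simpl; [lra|]. rewrite IHk; lra. Qed.

Lemma fsum_minus k f g : fsum k (fun m => f m - g m) = fsum k f - fsum k g.
Proof. induction k; simpl; [lra|]. rewrite IHk; lra. Qed.

Lemma fsum_const0 k : fsum k (fun _ => 0) = 0.
Proof. induction k; simpl; [lra|]. rewrite IHk; lra. Qed.

Lemma fsum_eq0 k f : (forall m, (m < k)%nat -> f m = 0) -> fsum k f = 0.
Proof. intros H. rewrite (fsum_ext k f (fun _ => 0)) by auto. apply fsum_const0. Qed.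

Lemma fsum_abs_le k f : Rabs (fsum k f) <= fsum k (fun m => Rabs (f m)).
Proof. induction k; simpl. rewrite Rabs_R0; lra.
  eapply Rle_trans; [apply Rabs_triang|]. lra. Qed.

Lemma fsum_second_diff k f1 f0 f2 : 2 * fsum k f1 - fsum k f0 - fsum k f2 = fsum k (fun p => 2 * f1 p - f0 p - f2 p).
Proof. induction k; simpl; [ring|]. rewrite <- IHk. ring. Qed.

Lemma fsum_le k f g : (forall m, (m < k)%nat -> f m <= g m) -> fsum k f <= fsum k g.
Proof. induction k; intros H; simpl; [lra|]. specialize (IHk (fun m Hm => H m ltac:(lia))).
  specialize (H k ltac:(lia)). lra. Qed.

Lemma fsum_nonneg k f : (forall m, (m < k)%nat -> 0 <= f m) -> 0 <= fsum k f.
Proof. intros H. rewrite <- (fsum_const0 k). apply fsum_le; auto. Qed.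

Lemma fsum_only k f m0 : (m0 < k)%nat -> (forall m, (m < k)%nat -> m <> m0 -> f m = 0) ->
  fsum k f = f m0.
Proof. induction k; intros H1 H2; [lia|]. simpl.
  destruct (Nat.eq_dec m0 k) as [->|Hn].
  - rewrite fsum_eq0; [lra|]. intros m Hm. apply H2; lia.
  - rewrite IHk by (try lia; intros; apply H2; lia). rewrite (H2 k) by lia. lra. Qed.

Lemma fsum_term_le k f m0 : (forall m, (m < k)%nat -> 0 <= f m) -> (m0 < k)%nat -> f m0 <= fsum k f.
Proof. induction k; intros H H0; [lia|]. simpl.
  destruct (Nat.eq_dec m0 k) as [->|Hn].
  - assert (0 <= fsum k f) by (apply fsum_nonneg; intros; apply H; lia). lra.
  - assert (f m0 <= fsum k f) by (apply IHk; [intros; apply H; lia| lia]).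
    specialize (H k ltac:(lia)). lra. Qed.

Lemma fsum_swap a b f : fsum a (fun i => fsum b (fun j => f i j)) = fsum b (fun j => fsum a (fun i => f i j)).
Proof. induction a; simpl. rewrite fsum_const0; auto. rewrite IHa, <- fsum_plus. auto. Qed.

Lemma fsum_const k c : fsum k (fun _ => c) = INR k * c.
Proof. induction k; simpl fsum. simpl; ring. rewrite IHk, S_INR. ring. Qed.

Lemma fsum_mul M M' a b : fsum M a * fsum M' b = fsum M (fun m => fsum M' (fun k => a m * b k)).
Proof. induction M; simpl; [ring|]. rewrite <- IHM. rewrite fsum_scal. ring. Qed.

Lemma Rabs_mul_le x y A B : Rabs x <= A -> Rabs y <= B -> Rabs (x * y) <= A * B.
Proof. intros. rewrite Rabs_mult. apply Rmult_le_compat; auto; apply Rabs_pos. Qed.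

Lemma fsum_abs_mul_bound d (x y : nat -> R) A B :
  fsum d (fun j => Rabs (x j)) <= A -> (forall j, (j < d)%nat -> Rabs (y j) <= B) -> 0 <= B ->
  Rabs (fsum d (fun j => x j * y j)) <= A * B.
Proof. intros H1 H2 HB. eapply Rle_trans; [apply fsum_abs_le|].
  apply Rle_trans with (fsum d (fun j => Rabs (x j)) * B); [|apply Rmult_le_compat_r; auto].
  rewrite Rmult_comm, <- fsum_scal. apply fsum_le. intros j Hj. rewrite Rabs_mult, Rmult_comm.
  apply Rmult_le_compat_r; [apply Rabs_pos|auto]. Qed.

Lemma fsum_abs_disjoint_le k g B : 0 <= B ->
  (forall m m', (m < k)%nat -> (m' < k)%nat -> g m <> 0 -> g m' <> 0 -> m = m') ->
  (forall m, (m < k)%nat -> Rabs (g m) <= B) -> fsum k (fun m => Rabs (g m)) <= B.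
Proof. induction k; intros HB H1 H2; simpl; [lra|].
  destruct (Req_dec (g k) 0) as [E|E].
  - rewrite E, Rabs_R0, Rplus_0_r. apply IHk; auto; intros; first [ apply H1; auto; lia | apply H2; lia ].
  - rewrite fsum_eq0. rewrite Rplus_0_l; apply H2; lia.
    intros m Hm. destruct (Req_dec (g m) 0) as [E'|E'].
    + rewrite E', Rabs_R0; auto.
    + exfalso. assert (m = k) by (apply H1; auto; lia). lia. Qed.

Lemma fmax_nonneg k f : 0 <= fmax k f.
Proof. induction k; simpl; [lra|]. eapply Rle_trans; [exact IHk| apply Rmax_l]. Qed.

Lemma fmax_ge k f m : (m < k)%nat -> f m <= fmax k f.
Proof. induction k; intros H; [lia|]. simpl. destruct (Nat.eq_dec m k) as [->|Hn].
  apply Rmax_r. eapply Rle_trans; [apply IHk; lia| apply Rmax_l]. Qed.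

Lemma fmax_le k f B : 0 <= B -> (forall m, (m < k)%nat -> f m <= B) -> fmax k f <= B.
Proof. induction k; intros HB H; simpl; [lra|]. apply Rmax_lub; [apply IHk|apply H]; auto. Qed.

Lemma fsum_geom_eq k r : fsum k (fun p => r ^ p) * (r - 1) = r ^ k - 1.
Proof. induction k; simpl; [lra|]. rewrite Rmult_plus_distr_r, IHk. ring. Qed.

Lemma fsum_geom_gt1 k r : 1 < r -> fsum k (fun p => r ^ p) <= r ^ k / (r - 1).
Proof. intros H. pose proof (fsum_geom_eq k r).
  apply (Rmult_le_reg_r (r - 1)); [lra|]. unfold Rdiv. rewrite Rmult_assoc, Rinv_l by lra. lra. Qed.

Lemma fsum_geom_lt1 k r : 0 <= r < 1 -> fsum k (fun p => r ^ p) <= 1 / (1 - r).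
Proof. intros H. pose proof (fsum_geom_eq k r).
  assert (0 <= r ^ k) by (apply pow_le; lra).
  apply (Rmult_le_reg_r (1 - r)); [lra|]. unfold Rdiv. rewrite Rmult_assoc, Rinv_l by lra. lra. Qed.

(** * Dyadic points and Schauder functions *)

Definition dyad (L k : nat) : R := INR k / 2 ^ L.

Lemma pow2_pos L : 0 < 2 ^ L.
Proof. apply pow_lt; lra. Qed.

Lemma dyad_le L a b : (a <= b)%nat -> dyad L a <= dyad L b.
Proof. intros H. unfold dyad, Rdiv. apply Rmult_le_compat_r.
  left; apply Rinv_0_lt_compat, pow2_pos. apply le_INR; auto. Qed.

Lemma dyad_lt L a b : (a < b)%nat -> dyad L a < dyad L b.
Proof. intros H. unfold dyad, Rdiv. apply Rmult_lt_compat_r.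
  apply Rinv_0_lt_compat, pow2_pos. apply lt_INR; auto. Qed.

Lemma dyad_scale e p a : dyad (e + p) (a * 2 ^ e) = INR a / 2 ^ p.
Proof. unfold dyad. rewrite mult_INR, pow_INR, pow_add. replace (INR 2) with 2 by (simpl; lra).
  field. split; apply pow_nonzero; lra. Qed.

Lemma dyad_double L k : dyad (S L) (2 * k) = dyad L k.
Proof. unfold dyad. rewrite mult_INR. replace (INR 2) with 2 by (simpl; lra).
  change (2 ^ S L) with (2 * 2 ^ L). field. apply pow_nonzero; lra. Qed.

Lemma dyad_0 L : dyad L 0 = 0.
Proof. unfold dyad. simpl. lra. Qed.

Lemma dyad_top L : dyad L (2 ^ L) = 1.
Proof. unfold dyad. rewrite pow_INR. replace (INR 2) with 2 by (simpl; lra). field. apply pow_nonzero; lra. Qed.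

Lemma dyad_nonneg L k : 0 <= dyad L k.
Proof. unfold dyad. apply Rmult_le_pos. apply pos_INR. left; apply Rinv_0_lt_compat, pow2_pos. Qed.

Lemma dyad_le1 L k : (k <= 2 ^ L)%nat -> dyad L k <= 1.
Proof. intros H. rewrite <- (dyad_top L). apply dyad_le; auto. Qed.

Lemma dyad_mid L k : dyad (S L) (S (2 * k)) = (dyad L k + dyad L (S k)) / 2.
Proof. unfold dyad. rewrite (S_INR (2*k)), mult_INR, (S_INR k). replace (INR 2) with 2 by (simpl; lra).
  change (2 ^ S L) with (2 * 2 ^ L). field. apply pow_nonzero; lra. Qed.

Lemma dyad_succ L k : dyad L (S k) = dyad L k + / 2 ^ L.
Proof. unfold dyad. rewrite S_INR. field. apply pow_nonzero; lra. Qed.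

Lemma dyad_dichotomy L q k : dyad L q <= dyad L k \/ dyad L (S k) <= dyad L q.
Proof. destruct (Nat.le_gt_cases q k). left; apply dyad_le; auto. right; apply dyad_le; lia. Qed.

Lemma dyad_1_0 : dyad 1 0 = 0. Proof. unfold dyad; simpl; lra. Qed.
Lemma dyad_1_1 : dyad 1 1 = / 2. Proof. unfold dyad; simpl; lra. Qed.
Lemma dyad_1_2 : dyad 1 2 = 1. Proof. unfold dyad; simpl; lra. Qed.

Definition hat (a b c x : R) : R :=
  if Rle_dec a x then if Rlt_dec x b then x - a else if Rlt_dec x c then c - x else 0 else 0.
Definition hat_slope (a b c x : R) : R :=
  if Rle_dec a x then if Rlt_dec x b then 1 else if Rlt_dec x c then -1 else 0 else 0.

Lemma phi_hat p m x : (1 <= m)%nat -> phi p m x = 2 ^ p * hat (t0 p m) (t1 p m) (t2 p m) x.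
Proof. intros H. destruct m; [lia|]. unfold phi, hat.
  destruct Rle_dec; [destruct Rlt_dec; [|destruct Rlt_dec]|]; ring. Qed.

Lemma chi_hat_slope p m x : (1 <= m)%nat -> chi p m x = 2 ^ p * hat_slope (t0 p m) (t1 p m) (t2 p m) x.
Proof. intros H. destruct m; [lia|]. unfold chi, hat_slope.
  destruct Rle_dec; [destruct Rlt_dec; [|destruct Rlt_dec]|]; ring. Qed.

Lemma t_formulas p m : (1 <= m)%nat ->
  t0 p m = (INR m - 1) / 2 ^ p /\ t1 p m = t0 p m + / 2 ^ S p /\ t2 p m = t0 p m + 2 * / 2 ^ S p.
Proof. intros H. unfold t0, t1, t2. rewrite minus_INR by auto. simpl INR.
  assert (0 < 2 ^ p) by apply pow2_pos. simpl. repeat split; field; lra. Qed.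

Lemma hat_lip a b c x y : b - a = c - b -> a < b ->
  Rabs (hat a b c x - hat a b c y) <= Rabs (x - y).
Proof. intros H1 H2. unfold hat.
  destruct (Rle_dec a x); [destruct (Rlt_dec x b); [|destruct (Rlt_dec x c)]|];
  destruct (Rle_dec a y); try (destruct (Rlt_dec y b); [|destruct (Rlt_dec y c)]); destruct_Rabs. Qed.

Lemma hat_bounds a b c x : b - a = c - b -> a < b -> 0 <= hat a b c x <= b - a.
Proof. intros. unfold hat. destruct (Rle_dec a x); [destruct (Rlt_dec x b); [|destruct (Rlt_dec x c)]|]; lra. Qed.

Lemma hat_neq0 a b c x : a < b -> b < c -> hat a b c x <> 0 -> a < x < c.
Proof. intros. unfold hat in *. destruct (Rle_dec a x); [destruct (Rlt_dec x b); [|destruct (Rlt_dec x c)]|]; lra. Qed.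

Lemma hat_slope_neq0 a b c x : a < b -> b < c -> hat_slope a b c x <> 0 -> a <= x < c.
Proof. intros. unfold hat_slope in *. destruct (Rle_dec a x); [destruct (Rlt_dec x b); [|destruct (Rlt_dec x c)]|]; lra. Qed.

Lemma hat_slope_abs_le a b c x : Rabs (hat_slope a b c x) <= 1.
Proof. unfold hat_slope. destruct (Rle_dec a x); [destruct (Rlt_dec x b); [|destruct (Rlt_dec x c)]|]; destruct_Rabs. Qed.

Lemma hat_eq0_out a b c x : a < b -> b < c -> (x <= a \/ c <= x) -> hat a b c x = 0.
Proof. intros. unfold hat. destruct (Rle_dec a x); [destruct (Rlt_dec x b); [|destruct (Rlt_dec x c)]|]; lra. Qed.

Lemma hat_mid a b c : b - a = c - b -> a < b -> hat a b c b = b - a.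
Proof. intros. unfold hat. destruct (Rle_dec a b); [destruct (Rlt_dec b b); [|destruct (Rlt_dec b c)]|]; lra. Qed.

Lemma hat_affine a b c u v : b - a = c - b -> a < b -> u < v ->
  (v <= a \/ (a <= u /\ v <= b) \/ (b <= u /\ v <= c) \/ c <= u) ->
  exists s0 s, (forall x, u <= x <= v -> hat a b c x = s0 + s * x) /\
               (forall x, u < x < v -> hat_slope a b c x = s).
Proof. intros H1 H2 H3 H4. unfold hat, hat_slope.
  destruct H4 as [H|[H|[H|H]]].
  - exists 0, 0; split; intros x Hx;
    (destruct (Rle_dec a x); [destruct (Rlt_dec x b); [|destruct (Rlt_dec x c)]|]); lra.
  - exists (- a), 1; split; intros x Hx;
    (destruct (Rle_dec a x); [destruct (Rlt_dec x b); [|destruct (Rlt_dec x c)]|]); lra.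
  - exists c, (-1); split; intros x Hx;
    (destruct (Rle_dec a x); [destruct (Rlt_dec x b); [|destruct (Rlt_dec x c)]|]); lra.
  - exists 0, 0; split; intros x Hx;
    (destruct (Rle_dec a x); [destruct (Rlt_dec x b); [|destruct (Rlt_dec x c)]|]); lra.
Qed.

Lemma t_ordered p m : (1 <= m)%nat ->
  t0 p m < t1 p m < t2 p m /\ t1 p m - t0 p m = t2 p m - t1 p m /\ t1 p m - t0 p m = / 2 ^ S p.
Proof. intros H. destruct (t_formulas p m H) as [E0 [E1 E2]].
  assert (0 < / 2 ^ S p) by (apply Rinv_0_lt_compat, pow2_pos).
  rewrite E1, E2. repeat split; lra. Qed.

Lemma pow2_inv_pow2S p : 2 ^ p * / 2 ^ S p = / 2.
Proof. change (2 ^ S p) with (2 * 2 ^ p). field. apply pow_nonzero; lra. Qed.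

Lemma phi_lip p m x y : Rabs (phi p m x - phi p m y) <= 2 ^ p * Rabs (x - y).
Proof. destruct m as [|m'].
  - destruct p; simpl. lra. rewrite Rminus_0_r, Rabs_R0.
    apply Rmult_le_pos; [left; exact (pow2_pos (S p))| apply Rabs_pos].
  - rewrite !phi_hat by lia. rewrite <- Rmult_minus_distr_l, Rabs_mult, Rabs_right.
    2: apply Rle_ge, pow_le; lra.
    apply Rmult_le_compat_l; [apply pow_le; lra|].
    destruct (t_ordered p (S m')) as [[Ha Hb] [Hc Hd]]; [lia|].
    apply hat_lip; lra. Qed.

Lemma phi_bounds p m x : (1 <= m)%nat -> 0 <= phi p m x <= / 2.
Proof. intros H. rewrite phi_hat by auto.
  destruct (t_ordered p m H) as [[Ha Hb] [Hc Hd]].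
  pose proof (hat_bounds (t0 p m) (t1 p m) (t2 p m) x Hc Ha).
  pose proof (pow2_pos p). rewrite <- (pow2_inv_pow2S p), <- Hd. split.
  apply Rmult_le_pos; lra. apply Rmult_le_compat_l; lra. Qed.

Lemma chi_abs_le p m x : Rabs (chi p m x) <= 2 ^ p.
Proof. destruct m as [|m'].
  - destruct p; simpl; destruct_Rabs. pose proof (pow2_pos p). lra.
  - rewrite chi_hat_slope by lia. rewrite Rabs_mult, Rabs_right by (apply Rle_ge, pow_le; lra).
    pose proof (hat_slope_abs_le (t0 p (S m')) (t1 p (S m')) (t2 p (S m')) x).
    pose proof (pow2_pos p). rewrite <- (Rmult_1_r (2 ^ p)) at 2. apply Rmult_le_compat_l; lra. Qed.

Lemma phi_support p m x : (1 <= m)%nat -> phi p m x <> 0 -> t0 p m < x < t2 p m.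
Proof. intros H H1. rewrite phi_hat in H1 by auto.
  destruct (t_ordered p m H) as [[Ha Hb] [Hc Hd]].
  apply (hat_neq0 _ (t1 p m)); auto. intro E; apply H1; rewrite E; ring. Qed.

Lemma chi_support p m x : (1 <= m)%nat -> chi p m x <> 0 -> t0 p m <= x < t2 p m.
Proof. intros H H1. rewrite chi_hat_slope in H1 by auto.
  destruct (t_ordered p m H) as [[Ha Hb] [Hc Hd]].
  apply (hat_slope_neq0 _ (t1 p m)); auto. intro E; apply H1; rewrite E; ring. Qed.

Lemma support_unique p m m' x : (1 <= m)%nat -> (1 <= m')%nat ->
  t0 p m <= x < t2 p m -> t0 p m' <= x < t2 p m' -> m = m'.
Proof. intros H H' [A1 A2] [B1 B2].
  destruct (t_formulas p m H) as [E0 _]. destruct (t_formulas p m' H') as [E0' _].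
  rewrite E0 in A1. rewrite E0' in B1. unfold t2 in A2, B2.
  pose proof (pow2_pos p).
  assert (INR m - 1 < INR m') as C1.
  { apply (Rmult_lt_reg_r (/ 2 ^ p)). apply Rinv_0_lt_compat; lra.
    unfold Rdiv in *. lra. }
  assert (INR m' - 1 < INR m) as C2.
  { apply (Rmult_lt_reg_r (/ 2 ^ p)). apply Rinv_0_lt_compat; lra.
    unfold Rdiv in *. lra. }
  assert (m < S m')%nat. { apply INR_lt. rewrite S_INR. lra. }
  assert (m' < S m)%nat. { apply INR_lt. rewrite S_INR. lra. }
  lia. Qed.

Lemma dyad_refine L p k : (L <= p)%nat -> dyad L k = dyad p (k * 2 ^ (p - L)).
Proof. intros H. replace p with ((p - L) + L)%nat at 1 by lia. rewrite dyad_scale. reflexivity. Qed.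

Lemma t1_dyad p m : (1 <= m)%nat -> t1 p m = dyad (S p) (2 * m - 1).
Proof. intros H. unfold t1, dyad. rewrite minus_INR by lia. rewrite mult_INR.
  replace (INR 2) with 2 by (simpl; lra). simpl INR. reflexivity. Qed.

Lemma t0_S q m : t0 q (S m) = dyad q m.
Proof. unfold t0, dyad. do 2 f_equal. lia. Qed.
Lemma t0_S_dyad q m : t0 q (S m) = dyad (S q) (2 * m).
Proof. rewrite dyad_double. apply t0_S. Qed.
Lemma t1_S_dyad q m : t1 q (S m) = dyad (S q) (S (2 * m)).
Proof. rewrite t1_dyad by lia. f_equal. lia. Qed.
Lemma t2_S_dyad q m : t2 q (S m) = dyad (S q) (S (S (2 * m))).
Proof. replace (S (S (2 * m))) with (2 * S m)%nat by lia. rewrite dyad_double. reflexivity. Qed.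

Definition pw_affine (L : nat) (f df : R -> R) : Prop := forall k, (k < 2 ^ L)%nat -> exists s,
  (forall x, dyad L k <= x <= dyad L (S k) -> f x = f (dyad L k) + s * (x - dyad L k)) /\
  (forall x, dyad L k < x < dyad L (S k) -> df x = s).

Lemma pw_affine_ext L f df f' df' : (forall x, f x = f' x) -> (forall x, df x = df' x) ->
  pw_affine L f df -> pw_affine L f' df'.
Proof. intros E1 E2 H k Hk. destruct (H k Hk) as [s [H1 H2]]. exists s. split; intros x Hx.
  rewrite <- !E1; auto. rewrite <- E2; auto. Qed.

Lemma pw_affine_plus L f df g dg : pw_affine L f df -> pw_affine L g dg ->
  pw_affine L (fun x => f x + g x) (fun x => df x + dg x).
Proof. intros Hf Hg k Hk. destruct (Hf k Hk) as [s [H1 H2]]. destruct (Hg k Hk) as [s' [H1' H2']].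
  exists (s + s'). split; intros x Hx. rewrite H1, H1' by auto. ring. rewrite H2, H2'; auto. Qed.

Lemma pw_affine_scal L c f df : pw_affine L f df -> pw_affine L (fun x => c * f x) (fun x => c * df x).
Proof. intros Hf k Hk. destruct (Hf k Hk) as [s [H1 H2]].
  exists (c * s). split; intros x Hx. rewrite H1 by auto. ring. rewrite H2; auto. Qed.

Lemma pw_affine_const L c : pw_affine L (fun _ => c) (fun _ => 0).
Proof. intros k Hk. exists 0. split; intros; ring. Qed.

Lemma pw_affine_fsum L N h dh : (forall m, (m < N)%nat -> pw_affine L (h m) (dh m)) ->
  pw_affine L (fun x => fsum N (fun m => h m x)) (fun x => fsum N (fun m => dh m x)).
Proof. induction N; intros H.
  - simpl. apply pw_affine_const.
  - simpl. apply (pw_affine_plus L (fun x => fsum N (fun m => h m x)) _ (h N) (dh N)).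
    apply IHN; intros; apply H; lia. apply H; lia. Qed.

Lemma pw_affine_mid L f df k : pw_affine L f df -> (k < 2 ^ L)%nat ->
  f (dyad (S L) (S (2 * k))) = (f (dyad L k) + f (dyad L (S k))) / 2.
Proof. intros H Hk. destruct (H k Hk) as [s [H1 _]].
  pose proof (dyad_lt L k (S k) ltac:(lia)). rewrite dyad_mid.
  rewrite (H1 ((dyad L k + dyad L (S k)) / 2)) by lra. rewrite (H1 (dyad L (S k))) by lra. field. Qed.

Lemma pw_affine_phi L p m : (S p <= L)%nat -> pw_affine L (phi p m) (chi p m).
Proof. intros HL k Hk. destruct m as [|m'].
  - destruct p.
    + exists 1. split; intros; simpl; ring.
    + exists 0. split; intros; simpl; ring.
  - destruct (t_ordered p (S m')) as [[Ha Hb] [Hc Hd]]; [lia|].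
    assert (Huv : dyad L k < dyad L (S k)) by (apply dyad_lt; lia).
    assert (D0 : t0 p (S m') <= dyad L k \/ dyad L (S k) <= t0 p (S m')).
    { change (t0 p (S m')) with (dyad p (S m' - 1)). rewrite (dyad_refine p L) by lia. apply dyad_dichotomy. }
    assert (D1 : t1 p (S m') <= dyad L k \/ dyad L (S k) <= t1 p (S m')).
    { rewrite t1_dyad, (dyad_refine (S p) L) by lia. apply dyad_dichotomy. }
    assert (D2 : t2 p (S m') <= dyad L k \/ dyad L (S k) <= t2 p (S m')).
    { change (t2 p (S m')) with (dyad p (S m')). rewrite (dyad_refine p L) by lia. apply dyad_dichotomy. }
    destruct (hat_affine (t0 p (S m')) (t1 p (S m')) (t2 p (S m')) (dyad L k) (dyad L (S k)))
      as [s0 [s [T1 T2]]]; auto.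
    { destruct D0, D1, D2; lra. }
    exists (2 ^ p * s). split; intros x Hx.
    + rewrite !phi_hat by lia. rewrite T1, T1 by lra. ring.
    + rewrite chi_hat_slope by lia. rewrite T2; auto. Qed.

Lemma pw_affine_Delta L f p : (S p <= L)%nat -> pw_affine L (Delta f p) (dDelta f p).
Proof. intros H. unfold Delta, dDelta.
  apply (pw_affine_fsum L _ (fun m x => coef f p m * phi p m x) (fun m x => coef f p m * chi p m x)).
  intros m _. apply pw_affine_scal, pw_affine_phi; auto. Qed.

Lemma pw_affine_SS L f n : (n <= L)%nat -> pw_affine L (SS f n) (dSS f n).
Proof. induction n; intros H.
  - apply (pw_affine_ext L (fun _ => f 0) (fun _ => 0)); auto. apply pw_affine_const.
  - apply (pw_affine_ext L (fun x => SS f n x + Delta f n x) (fun x => dSS f n x + dDelta f n x)); auto.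
    apply pw_affine_plus. apply IHn; lia. apply pw_affine_Delta; lia. Qed.

Lemma phi_coarse_dyad L p m k : (L <= p)%nat -> (1 <= m)%nat -> phi p m (dyad L k) = 0.
Proof. intros H H1. rewrite phi_hat by auto.
  destruct (t_ordered p m H1) as [[Ha Hb] [Hc Hd]].
  rewrite hat_eq0_out; auto; [ring|].
  rewrite (dyad_refine L p) by auto. change (t0 p m) with (dyad p (m-1)). change (t2 p m) with (dyad p m).
  destruct (dyad_dichotomy p (k * 2 ^ (p - L)) (m - 1)) as [E|E]; [left; auto|right].
  replace (S (m - 1)) with m in E by lia. auto. Qed.

Lemma phi_0_pos p x : (1 <= p)%nat -> phi p 0 x = 0.
Proof. intros H. destruct p; [lia|]. reflexivity. Qed.
Lemma chi_0_pos p x : (1 <= p)%nat -> chi p 0 x = 0.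
Proof. intros H. destruct p; [lia|]. reflexivity. Qed.

Lemma Delta_coarse_dyad f p L k : (1 <= p)%nat -> (L <= p)%nat -> Delta f p (dyad L k) = 0.
Proof. intros H1 H2. unfold Delta. apply fsum_eq0. intros m Hm. destruct m.
  rewrite phi_0_pos by auto; ring. rewrite phi_coarse_dyad by lia; ring. Qed.

Lemma phi_t1 p m : (1 <= m)%nat -> phi p m (t1 p m) = / 2.
Proof. intros H. rewrite phi_hat by auto.
  destruct (t_ordered p m H) as [[Ha Hb] [Hc Hd]].
  rewrite hat_mid by auto. rewrite Hd. apply pow2_inv_pow2S. Qed.

Lemma phi_t1_other p m m' : (1 <= p)%nat -> (1 <= m)%nat -> m' <> m -> phi p m' (t1 p m) = 0.
Proof. intros Hp H H'. destruct (Req_dec (phi p m' (t1 p m)) 0) as [E|E]; auto.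
  destruct m' as [|m'']. rewrite phi_0_pos by auto; auto.
  exfalso. apply H'. apply (support_unique p (S m'') m (t1 p m)); try lia.
  pose proof (phi_support p (S m'') _ ltac:(lia) E). lra.
  destruct (t_ordered p m H) as [[Ha Hb] _]. lra. Qed.

Lemma Delta_t1 f p m : (1 <= p)%nat -> (1 <= m <= 2 ^ p)%nat -> Delta f p (t1 p m) = coef f p m / 2.
Proof. intros Hp Hm. unfold Delta. rewrite (fsum_only _ _ m) by (try lia; intros; rewrite phi_t1_other by lia; ring).
  rewrite phi_t1 by lia. field. Qed.

Lemma Delta_0_expand f x : Delta f 0 x = coef f 0 0 * x + coef f 0 1 * phi 0 1 x.
Proof. unfold Delta. simpl. ring. Qed.

Lemma t0_01 : t0 0 1 = 0. Proof. unfold t0. simpl. lra. Qed.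
Lemma t1_01 : t1 0 1 = / 2. Proof. unfold t1. simpl. lra. Qed.
Lemma t2_01 : t2 0 1 = 1. Proof. unfold t2. simpl. lra. Qed.

Lemma phi_0_1_hat x : phi 0 1 x = hat 0 (/2) 1 x.
Proof. rewrite phi_hat by lia. rewrite t0_01, t1_01, t2_01. simpl. ring. Qed.

Lemma Delta_at_0 f p : Delta f p 0 = 0.
Proof. destruct p.
  - rewrite Delta_0_expand, phi_0_1_hat. rewrite hat_eq0_out by lra. ring.
  - pose proof (Delta_coarse_dyad f (S p) 0 0 ltac:(lia) ltac:(lia)) as E. rewrite dyad_0 in E. exact E. Qed.

Lemma SS_1_dyad f k : (k <= 2)%nat -> SS f 1 (dyad 1 k) = f (dyad 1 k).
Proof. intros Hk. simpl SS. rewrite Delta_0_expand, phi_0_1_hat. unfold coef. rewrite t0_01, t1_01, t2_01.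
  assert ((k = 0 \/ k = 1 \/ k = 2)%nat) as [ -> | [ -> | -> ]] by lia;
  rewrite ?dyad_1_0, ?dyad_1_1, ?dyad_1_2; unfold hat;
  repeat (destruct Rle_dec; try lra); repeat (destruct Rlt_dec; try lra). Qed.

Lemma SS_dyad f n k : (1 <= n)%nat -> (k <= 2 ^ n)%nat -> SS f n (dyad n k) = f (dyad n k).
Proof. revert k. induction n as [|n IH]; intros k Hn Hk; [lia|].
  destruct (Nat.eq_dec n 0) as [->|Hn0]; [apply SS_1_dyad; simpl in Hk; lia|].
  simpl SS. simpl in Hk. destruct (Nat.Even_or_Odd k) as [[m ->]|[m ->]].
  - rewrite dyad_double, IH, Delta_coarse_dyad by lia. ring.
  - replace (2 * m + 1)%nat with (S (2 * m)) by lia.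
    rewrite <- (t1_S_dyad n m), Delta_t1, (t1_S_dyad n m) by lia.
    rewrite (pw_affine_mid n (SS f n) (dSS f n) m), !IH by (try apply pw_affine_SS; lia).
    unfold coef. rewrite t0_S, (t1_S_dyad n m). change (t2 n (S m)) with (dyad n (S m)). field. Qed.

Lemma Delta_0_dyad_1 f k : (k <= 2)%nat -> Delta f 0 (dyad 1 k) = f (dyad 1 k) - f 0.
Proof. intros Hk. pose proof (SS_dyad f 1 k ltac:(lia) ltac:(simpl; lia)) as H.
  change (SS f 1 (dyad 1 k)) with (f 0 + Delta f 0 (dyad 1 k)) in H. lra. Qed.

Lemma SS_sub f n x y : SS f n x - SS f n y = fsum n (fun p => Delta f p x - Delta f p y).
Proof. induction n; simpl; [lra|]. rewrite <- IHn. ring. Qed.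

Lemma coef_sub f g q m : coef (fun t => f t - g t) q m = coef f q m - coef g q m.
Proof. unfold coef. destruct m; [destruct q|]; ring. Qed.

Lemma phi_abs_le p m x : (1 <= m)%nat -> Rabs (phi p m x) <= / 2.
Proof. intros H. destruct (phi_bounds p m x H). rewrite Rabs_right; lra. Qed.

Lemma phi_support_unique p m m' x : (1 <= p)%nat -> phi p m x <> 0 -> phi p m' x <> 0 -> m = m'.
Proof. intros Hp H1 H2. destruct m. rewrite phi_0_pos in H1 by auto; lra.
  destruct m'. rewrite phi_0_pos in H2 by auto; lra.
  apply (support_unique p (S m) (S m') x); try lia.
  pose proof (phi_support p (S m) x ltac:(lia) H1); lra.
  pose proof (phi_support p (S m') x ltac:(lia) H2); lra. Qed.

Lemma chi_support_unique p m m' x : (1 <= p)%nat -> chi p m x <> 0 -> chi p m' x <> 0 -> m = m'.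
Proof. intros Hp H1 H2. destruct m. rewrite chi_0_pos in H1 by auto; lra.
  destruct m'. rewrite chi_0_pos in H2 by auto; lra.
  apply (support_unique p (S m) (S m') x); try lia.
  apply (chi_support p (S m) x ltac:(lia) H1). apply (chi_support p (S m') x ltac:(lia) H2). Qed.

Lemma fsum_abs_phi_le p x : 0 <= x <= 1 -> fsum (S (2 ^ p)) (fun m => Rabs (phi p m x)) <= 2.
Proof. intros Hx. destruct p.
  - replace (fsum (S (2^0)) (fun m => Rabs (phi 0 m x))) with (Rabs (phi 0 0 x) + Rabs (phi 0 1 x)) by (simpl; ring).
    change (phi 0 0 x) with x. pose proof (phi_abs_le 0 1 x ltac:(lia)). destruct_Rabs.
  - eapply Rle_trans; [apply (fsum_abs_disjoint_le _ _ (/ 2))|]; try lra.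
    + intros m m' _ _ H1 H2. apply (phi_support_unique (S p) m m' x); auto; lia.
    + intros m _. destruct m. rewrite phi_0_pos by lia. rewrite Rabs_R0; lra. apply phi_abs_le; lia. Qed.

Lemma fsum_abs_chi_le p x : fsum (S (2 ^ p)) (fun m => Rabs (chi p m x)) <= 2 * 2 ^ p.
Proof. destruct p.
  - replace (fsum (S (2^0)) (fun m => Rabs (chi 0 m x))) with (Rabs (chi 0 0 x) + Rabs (chi 0 1 x)) by (simpl; ring).
    change (chi 0 0 x) with 1. pose proof (chi_abs_le 0 1 x) as H. change (2 ^ 0) with 1 in *. destruct_Rabs.
  - pose proof (pow2_pos (S p)).
    eapply Rle_trans; [apply (fsum_abs_disjoint_le _ _ (2 ^ S p))|]; try lra.
    + intros m m' _ _ H1 H2. apply (chi_support_unique (S p) m m' x); auto; lia.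
    + intros m _. apply chi_abs_le. Qed.

Lemma fsum_abs_phi_sub_le p x y : fsum (S (2 ^ p)) (fun m => Rabs (phi p m x - phi p m y)) <= 2 * 2 ^ p * Rabs (x - y).
Proof. destruct p.
  - replace (fsum (S (2^0)) (fun m => Rabs (phi 0 m x - phi 0 m y))) with (Rabs (phi 0 0 x - phi 0 0 y) + Rabs (phi 0 1 x - phi 0 1 y)) by (simpl; ring).
    change (phi 0 0 x) with x. change (phi 0 0 y) with y. pose proof (phi_lip 0 1 x y) as H. change (2 ^ 0) with 1 in *. lra.
  - set (u := fun m => if Req_EM_T (phi (S p) m x) 0 then 0 else phi (S p) m x - phi (S p) m y).
    set (w := fun m => if Req_EM_T (phi (S p) m x) 0 then phi (S p) m x - phi (S p) m y else 0).
    assert (E : forall m, Rabs (phi (S p) m x - phi (S p) m y) <= Rabs (u m) + Rabs (w m)).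
    { intros m. unfold u, w. destruct Req_EM_T; rewrite Rabs_R0; lra. }
    eapply Rle_trans. apply (fsum_le _ _ (fun m => Rabs (u m) + Rabs (w m))). intros; apply E.
    rewrite fsum_plus. pose proof (Rabs_pos (x - y)). pose proof (pow2_pos (S p)).
    assert (fsum (S (2 ^ S p)) (fun m => Rabs (u m)) <= 2 ^ S p * Rabs (x - y)).
    { apply fsum_abs_disjoint_le. apply Rmult_le_pos; lra.
      - intros m m' _ _. unfold u. destruct Req_EM_T; [intros K; lra|]. destruct Req_EM_T; [intros _ K; lra|].
        intros; apply (phi_support_unique (S p) m m' x); auto; lia.
      - intros m _. unfold u. destruct Req_EM_T. rewrite Rabs_R0. apply Rmult_le_pos; lra. apply phi_lip. }
    assert (fsum (S (2 ^ S p)) (fun m => Rabs (w m)) <= 2 ^ S p * Rabs (x - y)).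
    { apply fsum_abs_disjoint_le. apply Rmult_le_pos; lra.
      - intros m m' _ _. unfold w. destruct Req_EM_T as [E1|]; [|intros K; lra]. destruct Req_EM_T as [E2|]; [|intros _ K; lra].
        rewrite E1, E2. intros K1 K2. apply (phi_support_unique (S p) m m' y); auto; try lia; intro; apply K1 || apply K2; lra.
      - intros m _. unfold w. destruct Req_EM_T. apply phi_lip. rewrite Rabs_R0. apply Rmult_le_pos; lra. }
    lra. Qed.

Lemma rowsum_expansion_le d M (c : nat -> nat -> R) (h : nat -> R) B :
  (forall m, (m < M)%nat -> fsum d (fun j => Rabs (c j m)) <= B) ->
  fsum d (fun j => Rabs (fsum M (fun m => c j m * h m))) <= B * fsum M (fun m => Rabs (h m)).
Proof. intros H. eapply Rle_trans. apply fsum_le. intros j _. apply fsum_abs_le.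
  rewrite fsum_swap. rewrite <- fsum_scal. apply fsum_le. intros m Hm.
  rewrite (fsum_ext _ _ (fun j => Rabs (c j m) * Rabs (h m))) by (intros; apply Rabs_mult).
  rewrite (fsum_ext _ _ (fun j => Rabs (h m) * Rabs (c j m))) by (intros; ring).
  rewrite fsum_scal. rewrite Rmult_comm. apply Rmult_le_compat_r. apply Rabs_pos. auto. Qed.

Definition coef_rowsum_le d (F : nat -> R -> R) p B := forall m, (m <= 2 ^ p)%nat -> fsum d (fun j => Rabs (coef (F j) p m)) <= B.

Lemma rowsum_Delta_le d F p B x : coef_rowsum_le d F p B -> 0 <= x <= 1 -> 0 <= B ->
  fsum d (fun j => Rabs (Delta (F j) p x)) <= 2 * B.
Proof. intros H Hx HB. unfold Delta.
  eapply Rle_trans. apply (rowsum_expansion_le d _ (fun j m => coef (F j) p m) (fun m => phi p m x) B).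
  intros; apply H; lia. pose proof (fsum_abs_phi_le p x Hx). nra. Qed.

Lemma rowsum_Delta_sub_le d F p B x y : coef_rowsum_le d F p B -> 0 <= B ->
  fsum d (fun j => Rabs (Delta (F j) p x - Delta (F j) p y)) <= B * (2 * 2 ^ p * Rabs (x - y)).
Proof. intros H HB. unfold Delta.
  rewrite (fsum_ext d _ (fun j => Rabs (fsum (S (2 ^ p)) (fun m => coef (F j) p m * (phi p m x - phi p m y))))).
  2: { intros j _. rewrite <- fsum_minus. f_equal. apply fsum_ext. intros; ring. }
  eapply Rle_trans. apply (rowsum_expansion_le d _ (fun j m => coef (F j) p m) (fun m => phi p m x - phi p m y) B).
  intros; apply H; lia. apply Rmult_le_compat_l; auto. apply fsum_abs_phi_sub_le. Qed.

Lemma rowsum_dDelta_le d F p B x : coef_rowsum_le d F p B -> 0 <= B ->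
  fsum d (fun j => Rabs (dDelta (F j) p x)) <= B * (2 * 2 ^ p).
Proof. intros H HB. unfold dDelta.
  eapply Rle_trans. apply (rowsum_expansion_le d _ (fun j m => coef (F j) p m) (fun m => chi p m x) B).
  intros; apply H; lia. apply Rmult_le_compat_l; auto. apply fsum_abs_chi_le. Qed.

Definition coef_abs_le (f : R -> R) p B := forall m, (m <= 2 ^ p)%nat -> Rabs (coef f p m) <= B.

Lemma coef_abs_rowsum f p B : coef_abs_le f p B -> coef_rowsum_le 1 (fun _ => f) p B.
Proof. intros H m Hm. simpl. rewrite Rplus_0_l. auto. Qed.

Lemma Delta_abs_le f p B x : coef_abs_le f p B -> 0 <= x <= 1 -> 0 <= B -> Rabs (Delta f p x) <= 2 * B.
Proof. intros H Hx HB. pose proof (rowsum_Delta_le 1 (fun _ => f) p B x (coef_abs_rowsum f p B H) Hx HB). simpl in H0. lra. Qed.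

Lemma dDelta_abs_le f p B x : coef_abs_le f p B -> 0 <= B -> Rabs (dDelta f p x) <= B * (2 * 2 ^ p).
Proof. intros H HB. pose proof (rowsum_dDelta_le 1 (fun _ => f) p B x (coef_abs_rowsum f p B H) HB). simpl in H0. lra. Qed.

Lemma Delta_sub_le f p B x y : coef_abs_le f p B -> 0 <= B -> Rabs (Delta f p x - Delta f p y) <= B * (2 * 2 ^ p * Rabs (x - y)).
Proof. intros H HB. pose proof (rowsum_Delta_sub_le 1 (fun _ => f) p B x y (coef_abs_rowsum f p B H) HB). simpl in H0. lra. Qed.

Lemma SS_expand f n x : SS f n x = f 0 + fsum n (fun p => Delta f p x).
Proof. induction n; simpl; [lra|]. rewrite IHn; ring. Qed.

Lemma dSS_expand f n x : dSS f n x = fsum n (fun p => dDelta f p x).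
Proof. induction n; simpl; [lra|]. rewrite IHn; ring. Qed.

(** * Hölder families *)

Section HolderFamily.
Variable rho : R.
Hypothesis Hrho : 1 < rho < 2.

Lemma fsum_inv_pow_le n : fsum n (fun p => / rho ^ p) <= 1 / (1 - / rho).
Proof. rewrite (fsum_ext _ _ (fun p => (/ rho) ^ p)) by (intros; rewrite pow_inv; auto).
  apply fsum_geom_lt1. split. left; apply Rinv_0_lt_compat; lra.
  rewrite <- Rinv_1. apply Rinv_lt_contravar; lra. Qed.

Lemma fsum_ratio_pow_le n : fsum n (fun p => 2 ^ p / rho ^ p) <= (2 / rho) ^ n / (2 / rho - 1).
Proof. rewrite (fsum_ext _ _ (fun p => (2 / rho) ^ p)).
  apply fsum_geom_gt1. apply (Rmult_lt_reg_r rho); [lra|]. unfold Rdiv; rewrite Rmult_assoc, Rinv_l; lra.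
  intros. unfold Rdiv. rewrite Rpow_mult_distr, pow_inv. auto. Qed.

Lemma inv_pow_pos n : 0 < / rho ^ n.
Proof. apply Rinv_0_lt_compat, pow_lt; lra. Qed.

Lemma ratio_gt1 : 1 < 2 / rho.
Proof. apply (Rmult_lt_reg_r rho); [lra|]. unfold Rdiv; rewrite Rmult_assoc, Rinv_l; lra. Qed.

(* Row-sum form of ‖F‖_α ≤ K for rho = 2^α, matching the operator norm on L(R^d, R^n) used
   in [mat_holder]. *)
Definition holder_family d (F : nat -> R -> R) K :=
  fsum d (fun j => Rabs (F j 0)) <= rho * K /\ forall p, coef_rowsum_le d F p (K / rho ^ p).

Definition incr_const := 1 + 2 / (2 / rho - 1).
Definition sup_const := rho + 2 / (1 - / rho).

Lemma incr_const_ge1 : 1 <= incr_const.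
Proof. unfold incr_const. pose proof ratio_gt1. assert (0 < 2 / (2/rho - 1)) by (apply Rdiv_lt_0_compat; lra). lra. Qed.

Lemma sup_const_pos : 0 < sup_const.
Proof. unfold sup_const. assert (/ rho < 1) by (rewrite <- Rinv_1; apply Rinv_lt_contravar; lra).
  assert (0 < 2 / (1 - / rho)) by (apply Rdiv_lt_0_compat; lra). lra. Qed.

Lemma holder_family_incr d F K n k : holder_family d F K -> 0 <= K -> (k < 2 ^ n)%nat ->
  fsum d (fun j => Rabs (F j (dyad n (S k)) - F j (dyad n k))) <= incr_const * K / rho ^ n.
Proof. intros [H0 H] HK Hk. pose proof incr_const_ge1. pose proof (inv_pow_pos n).
  destruct n.
  - simpl in Hk. assert (k = 0)%nat by lia. subst. unfold dyad. simpl.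
    replace (1 / 1) with 1 by lra. replace (0 / 1) with 0 by lra.
    specialize (H 0%nat 0%nat ltac:(simpl; lia)). simpl in H. unfold coef in H.
    replace (K / 1) with K in H by field. replace (incr_const * K / 1) with (incr_const * K) by field.
    apply Rle_trans with K. lra. rewrite <- (Rmult_1_l K) at 1. apply Rmult_le_compat_r; lra.
  - rewrite (fsum_ext d _ (fun j => Rabs (fsum (S n) (fun p => Delta (F j) p (dyad (S n) (S k)) - Delta (F j) p (dyad (S n) k))))).
    2: { intros j _. rewrite <- (SS_dyad (F j) (S n) (S k)), <- (SS_dyad (F j) (S n) k) by lia. rewrite SS_sub. auto. }
    eapply Rle_trans. apply fsum_le. intros j _. apply fsum_abs_le.
    rewrite fsum_swap.
    eapply Rle_trans. apply fsum_le. intros p _. apply (rowsum_Delta_sub_le d F p (K / rho ^ p)). apply H. unfold Rdiv; apply Rmult_le_pos; [auto| left; apply inv_pow_pos].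
    rewrite dyad_succ. replace (dyad (S n) k + / 2 ^ S n - dyad (S n) k) with (/ 2 ^ S n) by ring.
    rewrite Rabs_right by (left; apply Rinv_0_lt_compat, pow2_pos).
    rewrite (fsum_ext _ _ (fun p => (2 * K * / 2 ^ S n) * (2 ^ p / rho ^ p))) by (intros; unfold Rdiv; ring).
    rewrite fsum_scal. pose proof (fsum_ratio_pow_le (S n)) as Hgeom. pose proof (pow2_pos (S n)). pose proof ratio_gt1.
    assert (0 <= 2 * K * / 2 ^ S n) by (apply Rmult_le_pos; [lra| left; apply Rinv_0_lt_compat; lra]).
    eapply Rle_trans. apply Rmult_le_compat_l. auto. apply Hgeom.
    unfold Rdiv. rewrite Rpow_mult_distr, pow_inv.
    replace (2 * K * / 2 ^ S n * (2 ^ S n * / rho ^ S n * / (2 * / rho - 1))) with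
      (2 * / (2 * / rho - 1) * K * / rho ^ S n) by (field; repeat split; try apply pow_nonzero; lra).
    apply Rmult_le_compat_r; [lra|]. apply Rmult_le_compat_r; auto. unfold incr_const, Rdiv. lra. Qed.

Lemma div_pow_nonneg K p : 0 <= K -> 0 <= K / rho ^ p.
Proof. intros HK. unfold Rdiv. apply Rmult_le_pos; auto. left; apply inv_pow_pos; auto. Qed.

Lemma inv_lt1 : / rho < 1.
Proof. rewrite <- Rinv_1; apply Rinv_lt_contravar; lra. Qed.

Lemma fsum_rowsum_Delta_le d F K n x : (forall p, coef_rowsum_le d F p (K / rho ^ p)) -> 0 <= K -> 0 <= x <= 1 ->
  fsum n (fun p => fsum d (fun j => Rabs (Delta (F j) p x))) <= 2 * K / (1 - / rho).
Proof. intros H HK Hx. eapply Rle_trans. apply fsum_le. intros p _. apply (rowsum_Delta_le d F p (K / rho ^ p)); auto.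
  apply div_pow_nonneg; auto.
  rewrite (fsum_ext _ _ (fun p => (2 * K) * / rho ^ p)) by (intros; unfold Rdiv; ring).
  rewrite fsum_scal. pose proof (fsum_inv_pow_le n). pose proof inv_lt1.
  unfold Rdiv in *. rewrite Rmult_1_l in H0. apply Rmult_le_compat_l; lra. Qed.

Lemma holder_family_sub0 d F K n k : holder_family d F K -> 0 <= K -> (1 <= n)%nat -> (k <= 2 ^ n)%nat ->
  fsum d (fun j => Rabs (F j (dyad n k) - F j 0)) <= 2 * K / (1 - / rho).
Proof. intros [H0 H] HK Hn Hk.
  rewrite (fsum_ext d _ (fun j => Rabs (fsum n (fun p => Delta (F j) p (dyad n k))))).
  2: { intros j _. rewrite <- (SS_dyad (F j) n k) by lia. rewrite SS_expand. f_equal. ring. }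
  eapply Rle_trans. apply fsum_le. intros j _. apply fsum_abs_le. rewrite fsum_swap.
  apply fsum_rowsum_Delta_le; auto. split; [apply dyad_nonneg| apply dyad_le1; auto]. Qed.

Lemma holder_family_sup d F K n k : holder_family d F K -> 0 <= K -> (1 <= n)%nat -> (k <= 2 ^ n)%nat ->
  fsum d (fun j => Rabs (F j (dyad n k))) <= sup_const * K.
Proof. intros HF HK Hn Hk. pose proof (holder_family_sub0 d F K n k HF HK Hn Hk). destruct HF as [H0 _].
  eapply Rle_trans. apply (fsum_le _ _ (fun j => Rabs (F j (dyad n k) - F j 0) + Rabs (F j 0))).
  intros j _. replace (F j (dyad n k)) with ((F j (dyad n k) - F j 0) + F j 0) at 1 by ring. apply Rabs_triang.
  rewrite fsum_plus. unfold sup_const. unfold Rdiv in *. lra. Qed.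

Lemma rowsum_SS_sub_le d F K p a b : (forall p, coef_rowsum_le d F p (K / rho ^ p)) -> 0 <= K ->
  fsum d (fun j => Rabs (SS (F j) p b - SS (F j) p a)) <= 2 * K * Rabs (b - a) * ((2 / rho) ^ p / (2 / rho - 1)).
Proof. intros H HK.
  rewrite (fsum_ext d _ (fun j => Rabs (fsum p (fun q => Delta (F j) q b - Delta (F j) q a)))) by (intros; rewrite SS_sub; auto).
  eapply Rle_trans. apply fsum_le. intros j _. apply fsum_abs_le. rewrite fsum_swap.
  eapply Rle_trans. apply fsum_le. intros q _. apply (rowsum_Delta_sub_le d F q (K / rho ^ q)); auto. apply div_pow_nonneg; auto.
  rewrite (fsum_ext _ _ (fun q => (2 * K * Rabs (b - a)) * (2 ^ q / rho ^ q))) by (intros; unfold Rdiv; ring).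
  rewrite fsum_scal. apply Rmult_le_compat_l. pose proof (Rabs_pos (b - a)). nra. apply fsum_ratio_pow_le; auto. Qed.

Lemma holder_family_coef d F K j : holder_family d F K -> (j < d)%nat -> forall p, coef_abs_le (F j) p (K / rho ^ p).
Proof. intros [_ H] Hj p m Hm. eapply Rle_trans; [|apply (H p m Hm)].
  apply (fsum_term_le d (fun j => Rabs (coef (F j) p m))); auto. intros; apply Rabs_pos. Qed.

Lemma holder_family_at0 d F K j : holder_family d F K -> (j < d)%nat -> Rabs (F j 0) <= rho * K.
Proof. intros [H _] Hj. eapply Rle_trans; [|apply H].
  apply (fsum_term_le d (fun j => Rabs (F j 0))); auto. intros; apply Rabs_pos. Qed.

Lemma SS_abs_le f K n x : (forall p, coef_abs_le f p (K / rho ^ p)) -> 0 <= K -> 0 <= x <= 1 ->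
  Rabs (SS f n x) <= Rabs (f 0) + 2 * K / (1 - / rho).
Proof. intros H HK Hx. rewrite SS_expand. eapply Rle_trans; [apply Rabs_triang|].
  apply Rplus_le_compat_l. eapply Rle_trans; [apply fsum_abs_le|].
  pose proof (fsum_rowsum_Delta_le 1 (fun _ => f) K n x (fun p => coef_abs_rowsum f p _ (H p)) HK Hx).
  simpl in H0. rewrite (fsum_ext _ _ (fun p => 0 + Rabs (Delta f p x))) by (intros; ring). auto. Qed.

Lemma dSS_abs_le f K n x : (forall p, coef_abs_le f p (K / rho ^ p)) -> 0 <= K ->
  Rabs (dSS f n x) <= 2 * K * ((2 / rho) ^ n / (2 / rho - 1)).
Proof. intros H HK. rewrite dSS_expand. eapply Rle_trans; [apply fsum_abs_le|].
  eapply Rle_trans. apply fsum_le. intros p _. apply (dDelta_abs_le f p (K / rho ^ p)); auto. apply div_pow_nonneg; auto.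
  rewrite (fsum_ext _ _ (fun q => (2 * K) * (2 ^ q / rho ^ q))) by (intros; unfold Rdiv; ring).
  rewrite fsum_scal. apply Rmult_le_compat_l. lra. apply fsum_ratio_pow_le; auto. Qed.
End HolderFamily.

Lemma Un_cv_abs_sub_le (u : nat -> R) l a B N : Un_cv u l -> (forall M, (N <= M)%nat -> Rabs (u M - a) <= B) -> Rabs (l - a) <= B.
Proof. intros Hu H. destruct (Rle_dec (Rabs (l - a)) B) as [|Hn]; auto. exfalso.
  destruct (Hu (Rabs (l - a) - B)) as [N0 HN0]; [lra|].
  specialize (HN0 (max N N0) ltac:(lia)). specialize (H (max N N0) ltac:(lia)).
  unfold R_dist in HN0. pose proof (Rabs_triang (u (max N N0) - a) (l - u (max N N0))).
  replace (u (max N N0) - a + (l - u (max N N0))) with (l - a) in H0 by ring.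
  rewrite Rabs_minus_sym in HN0. lra. Qed.

Lemma pow_eventually_lt r eps : 0 <= r < 1 -> 0 < eps -> exists N, forall n, (N <= n)%nat -> r ^ n < eps.
Proof. intros Hr He. destruct (pow_lt_1_zero r ltac:(rewrite Rabs_right; lra) eps He) as [N HN].
  exists N. intros n Hn. specialize (HN n Hn). rewrite Rabs_right in HN; auto. apply Rle_ge, pow_le; lra. Qed.

Lemma telescope_geom_le (u : nat -> R) C r N : 0 <= C -> 0 <= r < 1 ->
  (forall k, Rabs (u (S k) - u k) <= C * r ^ k) ->
  forall j, Rabs (u (N + j)%nat - u N) <= C * r ^ N / (1 - r).
Proof. intros HC Hr H.
  assert (forall j, Rabs (u (N + j)%nat - u N) <= C * r ^ N * fsum j (fun k => r ^ k)).
  { induction j. rewrite Nat.add_0_r. simpl. rewrite Rminus_diag, Rabs_R0. lra.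
    replace (N + S j)%nat with (S (N + j)) by lia. simpl fsum.
    replace (u (S (N + j)) - u N) with ((u (S (N + j)) - u (N + j)%nat) + (u (N + j)%nat - u N)) by ring.
    eapply Rle_trans; [apply Rabs_triang|]. specialize (H (N + j)%nat). rewrite pow_add in H. lra. }
  intros j. eapply Rle_trans; [apply H0|]. unfold Rdiv. apply Rmult_le_compat_l.
  apply Rmult_le_pos; auto; apply pow_le; lra.
  pose proof (fsum_geom_lt1 j r Hr). lra. Qed.

Lemma Rmult_lt_of_lt_div K x y : 0 < K -> x < y / K -> K * x < y.
Proof. intros HK H. apply (Rmult_lt_compat_l K) in H; auto. unfold Rdiv in H.
  rewrite (Rmult_comm y), <- Rmult_assoc, Rinv_r, Rmult_1_l in H by lra. auto. Qed.

Lemma geom_tail_eventually_lt C r eps : 0 <= C -> 0 <= r < 1 -> 0 < eps ->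
  exists N0, forall N, (N0 <= N)%nat -> C * r ^ N / (1 - r) < eps.
Proof. intros HC Hr He. destruct (pow_eventually_lt r (eps * (1 - r) / (C + 1))) as [N0 HN0]; auto.
  { apply Rdiv_lt_0_compat; [apply Rmult_lt_0_compat|]; lra. }
  exists N0. intros N HN. specialize (HN0 N HN). assert (0 <= r ^ N) by (apply pow_le; lra).
  apply (Rmult_lt_reg_r (1 - r)); [lra|]. unfold Rdiv. rewrite Rmult_assoc, Rinv_l, Rmult_1_r by lra.
  assert ((C + 1) * r ^ N < eps * (1 - r)) by (apply Rmult_lt_of_lt_div; [lra|auto]). nra. Qed.

Lemma geom_increments_limit (u : nat -> R) C r : 0 <= C -> 0 <= r < 1 ->
  (forall k, Rabs (u (S k) - u k) <= C * r ^ k) ->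
  exists l, forall N, Rabs (u N - l) <= C * r ^ N / (1 - r).
Proof. intros HC Hr H.
  assert (Htail : forall N m, (N <= m)%nat -> Rabs (u m - u N) <= C * r ^ N / (1 - r)).
  { intros N m Hm. replace m with (N + (m - N))%nat by lia. apply telescope_geom_le; auto. }
  destruct (Rcomplete.R_complete u) as [l Hl].
  { intros eps He. destruct (geom_tail_eventually_lt C r (eps / 2)) as [N0 HN0]; auto; [lra|].
    exists N0. intros p q Hp Hq. unfold R_dist.
    pose proof (Htail N0 p Hp). pose proof (Htail N0 q Hq). specialize (HN0 N0 (le_n _)).
    replace (u p - u q) with ((u p - u N0) - (u q - u N0)) by ring.
    eapply Rle_lt_trans; [apply Rabs_sub_le|]. lra. }
  exists l. intros N. rewrite Rabs_minus_sym. apply (Un_cv_abs_sub_le u l (u N) _ N Hl). auto. Qed.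

Lemma unif_cv01_geom n (F : nat -> nat -> R -> R) C r : 0 <= C -> 0 <= r < 1 ->
  (forall N i t, (i < n)%nat -> 0 <= t <= 1 -> Rabs (F (S N) i t - F N i t) <= C * r ^ N) ->
  exists G, unif_cv01 n F G.
Proof. intros HC Hr H.
  set (G := fun i t => epsilon (inhabits 0) (fun l => forall N, Rabs (F N i t - l) <= C * r ^ N / (1 - r))).
  assert (HG : forall i t, (i < n)%nat -> 0 <= t <= 1 -> forall N, Rabs (F N i t - G i t) <= C * r ^ N / (1 - r)).
  { intros i t Hi Ht. unfold G. apply epsilon_spec.
    apply (geom_increments_limit (fun N => F N i t) C r HC Hr). intros k. apply H; auto. }
  exists G. intros eps He. destruct (geom_tail_eventually_lt C r eps) as [N0 HN0]; auto.
  exists N0. intros N HN i t Hi Ht. eapply Rle_lt_trans; [apply HG; auto|apply HN0; auto]. Qed.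

Lemma unif_cv01_pw n F G : unif_cv01 n F G -> pw_cv01 n F G.
Proof. intros H i t Hi Ht eps He. destruct (H eps He) as [N0 HN0]. exists N0. intros N HN.
  unfold R_dist. apply HN0; auto. Qed.

Lemma unif_cv01_shift n F G : unif_cv01 n F G -> unif_cv01 n (fun N => F (S N)) G.
Proof. intros H eps He. destruct (H eps He) as [N0 HN0]. exists N0. intros N HN i t Hi Ht. apply HN0; auto; lia. Qed.

Lemma unif_cv01_sum3 n F1 F2 F3 F G1 G2 G3 :
  unif_cv01 n F1 G1 -> unif_cv01 n F2 G2 -> unif_cv01 n F3 G3 ->
  (forall N i t, (i < n)%nat -> 0 <= t <= 1 -> F N i t = F1 N i t + F2 N i t + F3 N i t) ->
  unif_cv01 n F (fun i t => G1 i t + G2 i t + G3 i t).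
Proof. intros H1 H2 H3 E eps He.
  destruct (H1 (eps / 3)) as [N1 K1]; [lra|]. destruct (H2 (eps / 3)) as [N2 K2]; [lra|].
  destruct (H3 (eps / 3)) as [N3 K3]; [lra|].
  exists (max N1 (max N2 N3)). intros N HN i t Hi Ht. rewrite E by auto.
  specialize (K1 N ltac:(lia) i t Hi Ht). specialize (K2 N ltac:(lia) i t Hi Ht). specialize (K3 N ltac:(lia) i t Hi Ht).
  replace (F1 N i t + F2 N i t + F3 N i t - (G1 i t + G2 i t + G3 i t)) with
    ((F1 N i t - G1 i t) + (F2 N i t - G2 i t) + (F3 N i t - G3 i t)) by ring.
  eapply Rle_lt_trans; [apply Rabs_triang|]. pose proof (Rabs_triang (F1 N i t - G1 i t) (F2 N i t - G2 i t)). lra. Qed.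

Lemma Rabs_sub_add_le a b c : Rabs (a - b + c) <= Rabs a + Rabs b + Rabs c.
Proof. destruct_Rabs. Qed.

Lemma unif_cv01_cont n F G : unif_cv01 n F G -> (forall N i, (i < n)%nat -> cont01 (F N i)) -> vec_cont01 n G.
Proof. intros H HF i Hi t Ht eps He. destruct (H (eps / 3)) as [N0 HN0]; [lra|].
  destruct (HF N0 i Hi t Ht (eps / 3)) as [del [Hd Hdel]]; [lra|].
  exists del. split; auto. intros s Hs Hst.
  pose proof (HN0 N0 (le_n _) i s Hi Hs). pose proof (HN0 N0 (le_n _) i t Hi Ht).
  specialize (Hdel s Hs Hst).
  replace (G i s - G i t) with ((F N0 i s - F N0 i t) - (F N0 i s - G i s) + (F N0 i t - G i t)) by ring.
  eapply Rle_lt_trans; [apply Rabs_sub_add_le|]. lra. Qed.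

Lemma cont01_sub f g : cont01 f -> cont01 g -> cont01 (fun t => f t - g t).
Proof. intros Hf Hg t Ht eps He. destruct (Hf t Ht (eps/2)) as [d1 [D1 K1]]; [lra|].
  destruct (Hg t Ht (eps/2)) as [d2 [D2 K2]]; [lra|].
  exists (Rmin d1 d2). split. apply Rmin_pos; auto. intros s Hs Hst.
  specialize (K1 s Hs ltac:(pose proof (Rmin_l d1 d2); lra)). specialize (K2 s Hs ltac:(pose proof (Rmin_r d1 d2); lra)).
  replace (f s - g s - (f t - g t)) with ((f s - f t) - (g s - g t)) by ring.
  eapply Rle_lt_trans; [apply Rabs_triang|]. rewrite Rabs_Ropp. lra. Qed.

Definition Lip01 (f : R -> R) := exists L, 0 <= L /\ forall s t, 0 <= s <= 1 -> 0 <= t <= 1 -> Rabs (f s - f t) <= L * Rabs (s - t).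

Lemma Lip01_cont f : Lip01 f -> cont01 f.
Proof. intros [L [HL H]] t Ht eps He. exists (eps / (L + 1)). split. apply Rdiv_lt_0_compat; lra.
  intros s Hs Hst. eapply Rle_lt_trans; [apply H; auto|].
  assert (L * Rabs (s - t) <= (L + 1) * Rabs (s - t)) by (pose proof (Rabs_pos (s - t)); nra).
  assert ((L + 1) * Rabs (s - t) < eps).
  { apply (Rmult_lt_reg_r (/ (L + 1))). apply Rinv_0_lt_compat; lra.
    rewrite Rmult_comm, <- Rmult_assoc, Rinv_l, Rmult_1_l by lra. unfold Rdiv in Hst. lra. }
  lra. Qed.

Lemma Lip01_bounded f : Lip01 f -> exists M, forall t, 0 <= t <= 1 -> Rabs (f t) <= M.
Proof. intros [L [HL H]]. exists (Rabs (f 0) + L). intros t Ht. specialize (H t 0 Ht ltac:(lra)).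
  rewrite Rminus_0_r in H. rewrite (Rabs_right t) in H by lra.
  replace (f t) with ((f t - f 0) + f 0) by ring. eapply Rle_trans; [apply Rabs_triang|]. nra. Qed.

Lemma Lip01_plus f g : Lip01 f -> Lip01 g -> Lip01 (fun t => f t + g t).
Proof. intros [L1 [H1 K1]] [L2 [H2 K2]]. exists (L1 + L2). split; [lra|]. intros s t Hs Ht.
  specialize (K1 s t Hs Ht). specialize (K2 s t Hs Ht).
  replace (f s + g s - (f t + g t)) with ((f s - f t) + (g s - g t)) by ring.
  eapply Rle_trans; [apply Rabs_triang|]. lra. Qed.

Lemma Lip01_const c : Lip01 (fun _ => c).
Proof. exists 0. split; [lra|]. intros. rewrite Rminus_diag, Rabs_R0. lra. Qed.

Lemma Lip01_mul f g : Lip01 f -> Lip01 g -> Lip01 (fun t => f t * g t).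
Proof. intros Hf Hg. destruct (Lip01_bounded f Hf) as [Mf HMf]. destruct (Lip01_bounded g Hg) as [Mg HMg].
  destruct Hf as [L1 [H1 K1]]. destruct Hg as [L2 [H2 K2]].
  assert (0 <= Mf) by (specialize (HMf 0 ltac:(lra)); pose proof (Rabs_pos (f 0)); lra).
  assert (0 <= Mg) by (specialize (HMg 0 ltac:(lra)); pose proof (Rabs_pos (g 0)); lra).
  exists (Mf * L2 + Mg * L1). split; [nra|]. intros s t Hs Ht.
  replace (f s * g s - f t * g t) with (f s * (g s - g t) + g t * (f s - f t)) by ring.
  eapply Rle_trans; [apply Rabs_triang|]. rewrite !Rabs_mult.
  specialize (K1 s t Hs Ht). specialize (K2 s t Hs Ht). specialize (HMf s Hs). specialize (HMg t Ht).
  pose proof (Rabs_pos (f s)). pose proof (Rabs_pos (g t)). pose proof (Rabs_pos (g s - g t)). pose proof (Rabs_pos (f s - f t)).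
  assert (Rabs (f s) * Rabs (g s - g t) <= Mf * (L2 * Rabs (s - t))) by (apply Rmult_le_compat; auto).
  assert (Rabs (g t) * Rabs (f s - f t) <= Mg * (L1 * Rabs (s - t))) by (apply Rmult_le_compat; auto).
  lra. Qed.

Lemma Lip01_fsum N (h : nat -> R -> R) : (forall m, (m < N)%nat -> Lip01 (h m)) -> Lip01 (fun t => fsum N (fun m => h m t)).
Proof. induction N; intros H; simpl. apply Lip01_const.
  apply (Lip01_plus (fun t => fsum N (fun m => h m t)) (h N)). apply IHN; intros; apply H; lia. apply H; lia. Qed.

Lemma Lip01_phi p m : Lip01 (phi p m).
Proof. exists (2 ^ p). split. apply pow_le; lra. intros; apply phi_lip. Qed.

Lemma Lip01_Delta f p : Lip01 (Delta f p).
Proof. unfold Delta. apply (Lip01_fsum _ (fun m t => coef f p m * phi p m t)). intros.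
  apply (Lip01_mul (fun _ => coef f p m) (phi p m)). apply Lip01_const. apply Lip01_phi. Qed.

Lemma Lip01_SS f n : Lip01 (SS f n).
Proof. induction n; simpl. apply Lip01_const.
  apply (Lip01_plus (SS f n) (Delta f n)); auto. apply Lip01_Delta. Qed.

Lemma Lip01_Ppart d v w P i : Lip01 (Ppart d v w P i).
Proof. unfold Ppart. apply (Lip01_fsum _ (fun p t => fsum d (fun j => SS (v i j) p t * Delta (w j) p t))). intros.
  apply (Lip01_fsum _ (fun j t => SS (v i j) m t * Delta (w j) m t)). intros j _.
  apply (Lip01_mul (SS (v i j) m) (Delta (w j) m)). apply Lip01_SS. apply Lip01_Delta. Qed.

(** * Integrals of piecewise affine products *)

Lemma is_RInt_plus_R (f g : R -> R) a b If Ig : is_RInt f a b If -> is_RInt g a b Ig ->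
  is_RInt (fun y => f y + g y) a b (If + Ig).
Proof. intros H1 H2. exact (is_RInt_plus f g a b If Ig H1 H2). Qed.

Lemma is_RInt_Chasles_R (f : R -> R) a b c l1 l2 : is_RInt f a b l1 -> is_RInt f b c l2 -> is_RInt f a c (l1 + l2).
Proof. intros H1 H2. exact (is_RInt_Chasles f a b c l1 l2 H1 H2). Qed.

Lemma is_RInt_point_R (f : R -> R) a : is_RInt f a a 0.
Proof. exact (is_RInt_point f a). Qed.

Lemma is_RInt_unique_R (f : R -> R) a b l : is_RInt f a b l -> RInt f a b = l.
Proof. apply (is_RInt_unique (V := R_CompleteNormedModule)). Qed.

Lemma is_RInt_ext_R (f g : R -> R) a b l : (forall x, Rmin a b < x < Rmax a b -> f x = g x) -> is_RInt f a b l -> is_RInt g a b l.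
Proof. apply is_RInt_ext. Qed.

Lemma RInt_plus_R (f g : R -> R) a b : ex_RInt f a b -> ex_RInt g a b ->
  RInt (fun x => f x + g x) a b = RInt f a b + RInt g a b.
Proof. intros. apply (RInt_plus (V := R_CompleteNormedModule) f g); auto. Qed.

Lemma ex_RInt_plus_R (f g : R -> R) a b : ex_RInt f a b -> ex_RInt g a b ->
  ex_RInt (fun x => f x + g x) a b.
Proof. intros. apply (ex_RInt_plus f g); auto. Qed.

Lemma RInt_scal_R (f : R -> R) a b c : ex_RInt f a b -> RInt (fun x => c * f x) a b = c * RInt f a b.
Proof. intros. apply (RInt_scal (V := R_CompleteNormedModule) f); auto. Qed.

Lemma ex_RInt_scal_R (f : R -> R) a b c : ex_RInt f a b -> ex_RInt (fun x => c * f x) a b.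
Proof. intros. apply (ex_RInt_scal f); auto. Qed.

Lemma RInt_ext_R (f g : R -> R) a b : (forall x, f x = g x) -> RInt f a b = RInt g a b.
Proof. intros H. apply RInt_ext. intros; auto. Qed.

Lemma ex_RInt_ext_R (f g : R -> R) a b : (forall x, f x = g x) -> ex_RInt f a b -> ex_RInt g a b.
Proof. intros H. apply ex_RInt_ext. intros; auto. Qed.

Lemma RInt_zero_R (f : R -> R) a b : (forall x, f x = 0) -> RInt f a b = 0.
Proof. intros H. rewrite (RInt_ext_R f (fun _ => 0)) by auto. rewrite RInt_const.
  apply (scal_zero_r (K := R_Ring) (V := R_ModuleSpace)). Qed.

Lemma is_RInt_affine_mul c x f0 s sg : c <= x ->
  is_RInt (fun y => (f0 + s * (y - c)) * sg) c x (sg * (f0 * (x - c) + s * (x - c) ^ 2 / 2)).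
Proof. intros H.
  pose (F := fun y => sg * (f0 * (y - c) + s * (y - c) ^ 2 / 2)).
  replace (sg * (f0 * (x - c) + s * (x - c) ^ 2 / 2)) with (F x - F c) by (unfold F; simpl; field).
  apply (is_RInt_derive F (fun y => (f0 + s * (y - c)) * sg)).
  - intros y _. unfold F. auto_derive; auto. field.
  - intros y _. apply (ex_derive_continuous (fun y => (f0 + s * (y - c)) * sg)). auto_derive; auto.
Qed.

Lemma is_RInt_affine_l (f dg : R -> R) c x s sg : c <= x ->
  (forall y, c <= y <= x -> f y = f c + s * (y - c)) -> (forall y, c < y < x -> dg y = sg) ->
  is_RInt (fun y => f y * dg y) c x (sg * (f c * (x - c) + s * (x - c) ^ 2 / 2)).
Proof. intros H H1 H2. eapply is_RInt_ext_R; [|apply is_RInt_affine_mul; auto].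
  intros y Hy. rewrite Rmin_left, Rmax_right in Hy by lra. rewrite (H1 y), (H2 y) by lra. auto. Qed.

Lemma is_RInt_affine_r (df g : R -> R) c x s sg : c <= x ->
  (forall y, c <= y <= x -> g y = g c + s * (y - c)) -> (forall y, c < y < x -> df y = sg) ->
  is_RInt (fun y => df y * g y) c x (sg * (g c * (x - c) + s * (x - c) ^ 2 / 2)).
Proof. intros H H1 H2. eapply is_RInt_ext_R; [|apply (is_RInt_affine_l g df c x s sg); auto].
  intros y _. cbv beta. ring. Qed.

Definition product_rule (f df g dg : R -> R) (x : R) :=
  is_RInt (fun y => f y * dg y + df y * g y) 0 x (f x * g x - f 0 * g 0) /\
  ex_RInt (fun y => f y * dg y) 0 x /\ ex_RInt (fun y => df y * g y) 0 x.

Lemma pw_affine_product_rule_upto L (f df g dg : R -> R) : pw_affine L f df -> pw_affine L g dg ->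
  forall k, (k <= 2 ^ L)%nat -> forall x, 0 <= x <= dyad L k -> product_rule f df g dg x.
Proof. intros Hf Hg. induction k; intros Hk x Hx.
  - rewrite dyad_0 in Hx. replace x with 0 by lra. unfold product_rule. split; [|split].
    replace (f 0 * g 0 - f 0 * g 0) with 0 by ring. apply is_RInt_point_R.
    exists 0; apply is_RInt_point_R. exists 0; apply is_RInt_point_R.
  - destruct (Rle_dec x (dyad L k)) as [Hle|Hlt]. apply IHk; [lia|lra].
    assert (Hk' : (k < 2 ^ L)%nat) by lia.
    destruct (Hf k Hk') as [s [F1 F2]]. destruct (Hg k Hk') as [sg [G1 G2]].
    pose proof (dyad_nonneg L k) as Hc.
    destruct (IHk ltac:(lia) (dyad L k) ltac:(lra)) as [I1 [E1 E2]].
    assert (P1 : is_RInt (fun y => f y * dg y) (dyad L k) x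
       (sg * (f (dyad L k) * (x - dyad L k) + s * (x - dyad L k) ^ 2 / 2))).
    { apply is_RInt_affine_l; [lra| |]; intros; [apply F1|apply G2]; lra. }
    assert (P2 : is_RInt (fun y => df y * g y) (dyad L k) x
       (s * (g (dyad L k) * (x - dyad L k) + sg * (x - dyad L k) ^ 2 / 2))).
    { apply is_RInt_affine_r; [lra| |]; intros; [apply G1|apply F2]; lra. }
    split; [|split].
    + replace (f x * g x - f 0 * g 0) with
        ((f (dyad L k) * g (dyad L k) - f 0 * g 0) +
         (sg * (f (dyad L k) * (x - dyad L k) + s * (x - dyad L k) ^ 2 / 2) +
          s * (g (dyad L k) * (x - dyad L k) + sg * (x - dyad L k) ^ 2 / 2))).
      apply (is_RInt_Chasles_R _ 0 (dyad L k) x); auto. apply (is_RInt_plus_R (fun y => f y * dg y) (fun y => df y * g y)); auto.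
      rewrite (F1 x), (G1 x) by lra. field.
    + eapply ex_RInt_Chasles; [apply E1|]. eexists; apply P1.
    + eapply ex_RInt_Chasles; [apply E2|]. eexists; apply P2.
Qed.

Lemma pw_affine_product_rule L (f df g dg : R -> R) x : pw_affine L f df -> pw_affine L g dg -> 0 <= x <= 1 -> product_rule f df g dg x.
Proof. intros Hf Hg Hx. apply (pw_affine_product_rule_upto L f df g dg Hf Hg (2 ^ L)); auto. rewrite dyad_top; auto. Qed.

Lemma Rint_RInt (h : R -> R) t : ex_RInt h 0 t -> Rint h 0 t = RInt h 0 t.
Proof. intros H. unfold Rint.
  destruct (epsilon_spec (inhabits 0) (fun I => exists pr : Riemann_integrable h 0 t, RiemannInt pr = I)) as [pr E].
  - exists (RInt h 0 t). exists (ex_RInt_Reals_0 h 0 t H). symmetry. apply RInt_Reals.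
  - rewrite <- E. rewrite (RInt_Reals h 0 t pr). auto. Qed.

Lemma ex_RInt_pw_affine_l L (f df g dg : R -> R) x : pw_affine L f df -> pw_affine L g dg -> 0 <= x <= 1 -> ex_RInt (fun y => f y * dg y) 0 x.
Proof. intros. apply (pw_affine_product_rule L f df g dg x); auto. Qed.
Lemma ex_RInt_pw_affine_r L (f df g dg : R -> R) x : pw_affine L f df -> pw_affine L g dg -> 0 <= x <= 1 -> ex_RInt (fun y => df y * g y) 0 x.
Proof. intros. apply (pw_affine_product_rule L f df g dg x); auto. Qed.

Lemma RInt_pw_affine_by_parts L (f df g dg : R -> R) x : pw_affine L f df -> pw_affine L g dg -> 0 <= x <= 1 ->
  RInt (fun y => f y * dg y) 0 x + RInt (fun y => df y * g y) 0 x = f x * g x - f 0 * g 0.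
Proof. intros Hf Hg Hx. destruct (pw_affine_product_rule L f df g dg x Hf Hg Hx) as [I [E1 E2]].
  rewrite <- (is_RInt_unique_R _ _ _ _ I). symmetry. apply (RInt_plus (V := R_CompleteNormedModule)); auto. Qed.

Lemma is_RInt_pw_affine_trapezoid L (f df g dg : R -> R) k : pw_affine L f df -> pw_affine L g dg -> (k < 2 ^ L)%nat ->
  is_RInt (fun y => f y * dg y) (dyad L k) (dyad L (S k))
    ((f (dyad L k) + f (dyad L (S k))) / 2 * (g (dyad L (S k)) - g (dyad L k))).
Proof. intros Hf Hg Hk. destruct (Hf k Hk) as [s [F1 F2]]. destruct (Hg k Hk) as [sg [G1 G2]].
  pose proof (dyad_lt L k (S k) ltac:(lia)).
  replace ((f (dyad L k) + f (dyad L (S k))) / 2 * (g (dyad L (S k)) - g (dyad L k))) with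
    (sg * (f (dyad L k) * (dyad L (S k) - dyad L k) + s * (dyad L (S k) - dyad L k) ^ 2 / 2)).
  apply is_RInt_affine_l; [lra| |]; intros; [apply F1|apply G2]; lra.
  rewrite (F1 (dyad L (S k))), (G1 (dyad L (S k))) by lra. field. Qed.

Lemma RInt_sub_0 (h : R -> R) a b : ex_RInt h 0 a -> ex_RInt h 0 b -> RInt h 0 b - RInt h 0 a = RInt h a b.
Proof. intros Ha Hb.
  assert (ex_RInt h a 0) by (apply ex_RInt_swap; auto).
  rewrite <- (RInt_Chasles (V := R_CompleteNormedModule) h a 0 b); auto.
  rewrite <- (opp_RInt_swap (V := R_CompleteNormedModule) h 0 a); auto.
  change (plus (opp (RInt h 0 a)) (RInt h 0 b)) with (- RInt h 0 a + RInt h 0 b). ring. Qed.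

Lemma RInt_0_lip (h : R -> R) M a b : ex_RInt h 0 a -> ex_RInt h 0 b -> 0 <= a <= 1 -> 0 <= b <= 1 ->
  (forall x, 0 <= x <= 1 -> Rabs (h x) <= M) -> Rabs (RInt h 0 b - RInt h 0 a) <= M * Rabs (b - a).
Proof. intros Ha Hb Ha' Hb' HM. rewrite RInt_sub_0 by auto.
  assert (ex_RInt h a b) by (eapply ex_RInt_Chasles; [apply ex_RInt_swap, Ha|auto]).
  destruct (Rle_dec a b).
  - rewrite (Rabs_right (b - a)) by lra. rewrite Rmult_comm. apply abs_RInt_le_const; auto.
    intros; apply HM; lra.
  - rewrite <- (opp_RInt_swap (V := R_CompleteNormedModule) h b a) by (apply ex_RInt_swap; auto).
    change (Rabs (- RInt h b a) <= M * Rabs (b - a)). rewrite Rabs_Ropp.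
    rewrite (Rabs_left (b - a)) by lra. rewrite Rmult_comm. replace (- (b - a)) with (a - b) by ring.
    apply abs_RInt_le_const; [lra| apply ex_RInt_swap; auto|]. intros; apply HM; lra. Qed.

Lemma RInt_0_abs_le (h : R -> R) M x : ex_RInt h 0 x -> 0 <= x <= 1 ->
  (forall y, 0 <= y <= 1 -> Rabs (h y) <= M) -> Rabs (RInt h 0 x) <= M.
Proof. intros H Hx HM. assert (0 <= M) by (specialize (HM 0 ltac:(lra)); pose proof (Rabs_pos (h 0)); lra).
  eapply Rle_trans; [apply abs_RInt_le_const; auto; [lra| intros; apply HM; lra]|]. nra. Qed.

Lemma Lip01_Rint L (f df g dg : R -> R) M : pw_affine L f df -> pw_affine L g dg -> 0 <= M ->
  (forall x, 0 <= x <= 1 -> Rabs (f x * dg x) <= M) -> Lip01 (fun t => Rint (fun s => f s * dg s) 0 t).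
Proof. intros Hf Hg HM HB. exists M. split; auto. intros s t Hs Ht.
  rewrite !Rint_RInt by (eapply ex_RInt_pw_affine_l; eauto).
  apply RInt_0_lip; auto; eapply ex_RInt_pw_affine_l; eauto. Qed.

Lemma ex_RInt_fsum M (h : nat -> R -> R) a b : (forall m, (m < M)%nat -> ex_RInt (h m) a b) ->
  ex_RInt (fun x => fsum M (fun m => h m x)) a b.
Proof. induction M; intros H; simpl.
  - apply (ex_RInt_ext_R (fun _ => 0)); auto. apply ex_RInt_const.
  - apply ex_RInt_plus_R. apply IHM; intros; apply H; lia. apply H; lia. Qed.

Lemma RInt_fsum M (h : nat -> R -> R) a b : (forall m, (m < M)%nat -> ex_RInt (h m) a b) ->
  RInt (fun x => fsum M (fun m => h m x)) a b = fsum M (fun m => RInt (h m) a b).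
Proof. induction M; intros H; simpl.
  - apply RInt_zero_R; auto.
  - rewrite RInt_plus_R; [rewrite IHM; [auto| intros; apply H; lia] | apply ex_RInt_fsum; intros; apply H; lia | apply H; lia]. Qed.

(** * Decomposition of the approximations *)

Lemma phi_chi_sym p m k x : (1 <= p)%nat -> phi p m x * chi p k x = chi p m x * phi p k x.
Proof. intros Hp. destruct (Nat.eq_dec m k) as [->|Hn]; [ring|].
  assert (phi p m x * chi p k x = 0).
  { destruct (Req_dec (phi p m x) 0) as [E|E]; [rewrite E; ring|].
    destruct (Req_dec (chi p k x) 0) as [E'|E']; [rewrite E'; ring|].
    exfalso. apply Hn. destruct m. rewrite phi_0_pos in E by auto; lra.
    destruct k. rewrite chi_0_pos in E' by auto; lra.
    apply (support_unique p (S m) (S k) x); try lia.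
    pose proof (phi_support p (S m) x ltac:(lia) E); lra. apply chi_support; auto; lia. }
  assert (chi p m x * phi p k x = 0).
  { destruct (Req_dec (chi p m x) 0) as [E|E]; [rewrite E; ring|].
    destruct (Req_dec (phi p k x) 0) as [E'|E']; [rewrite E'; ring|].
    exfalso. apply Hn. destruct m. rewrite chi_0_pos in E by auto; lra.
    destruct k. rewrite phi_0_pos in E' by auto; lra.
    apply (support_unique p (S m) (S k) x); try lia.
    apply chi_support; auto; lia. pose proof (phi_support p (S k) x ltac:(lia) E'); lra. }
  lra. Qed.

Lemma Delta_sym v w p x : (1 <= p)%nat -> Delta v p x * dDelta w p x = dDelta v p x * Delta w p x.
Proof. intros Hp. unfold Delta, dDelta. rewrite !fsum_mul. apply fsum_ext; intros m _. apply fsum_ext; intros k _.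
  transitivity (coef v p m * coef w p k * (phi p m x * chi p k x)); [ring|].
  rewrite phi_chi_sym by auto. ring. Qed.

Section ScalarIntegral.
Variables v w : R -> R.

Definition scalar_integral N t := RInt (fun s => SS v N s * dSS w N s) 0 t.

Lemma ex_RInt_pw_affine L (f df g dg : R -> R) t : pw_affine L f df -> pw_affine L g dg -> 0 <= t <= 1 ->
  ex_RInt (fun s => f s * dg s) 0 t /\ ex_RInt (fun s => df s * g s) 0 t.
Proof. intros. split; [eapply ex_RInt_pw_affine_l|eapply ex_RInt_pw_affine_r]; eauto. Qed.

(* Expanding S_{K+1} = S_K + Δ_K in both factors; the cross term ∫ S_K dΔ_K is integrated by
   parts, which yields the paraproduct term S_K v Δ_K w. *)
Lemma scalar_integral_succ K t : 0 <= t <= 1 ->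
  scalar_integral (S K) t - scalar_integral K t =
    (RInt (fun s => Delta v K s * dSS w K s) 0 t - RInt (fun s => dSS v K s * Delta w K s) 0 t)
    + SS v K t * Delta w K t + RInt (fun s => Delta v K s * dDelta w K s) 0 t.
Proof. intros Ht.
  assert (P1 : pw_affine (S K) (SS v K) (dSS v K)) by (apply pw_affine_SS; lia).
  assert (P2 : pw_affine (S K) (SS w K) (dSS w K)) by (apply pw_affine_SS; lia).
  assert (P3 : pw_affine (S K) (Delta v K) (dDelta v K)) by (apply pw_affine_Delta; lia).
  assert (P4 : pw_affine (S K) (Delta w K) (dDelta w K)) by (apply pw_affine_Delta; lia).
  destruct (ex_RInt_pw_affine _ _ _ _ _ t P1 P2 Ht) as [E1 _].
  destruct (ex_RInt_pw_affine _ _ _ _ _ t P3 P2 Ht) as [E2 _].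
  destruct (ex_RInt_pw_affine _ _ _ _ _ t P1 P4 Ht) as [E3 E3'].
  destruct (ex_RInt_pw_affine _ _ _ _ _ t P3 P4 Ht) as [E4 _].
  unfold scalar_integral.
  rewrite (RInt_ext_R _ (fun s => ((SS v K s * dSS w K s + Delta v K s * dSS w K s) + SS v K s * dDelta w K s)
     + Delta v K s * dDelta w K s)) by (intros; simpl; ring).
  rewrite !RInt_plus_R; auto; try (apply ex_RInt_plus_R; auto); try (apply ex_RInt_plus_R; auto).
  pose proof (RInt_pw_affine_by_parts _ _ _ _ _ t P1 P4 Ht) as PR. rewrite Delta_at_0 in PR.
  lra. Qed.

Lemma RInt_Delta_dDelta K t : (1 <= K)%nat -> 0 <= t <= 1 ->
  RInt (fun s => Delta v K s * dDelta w K s) 0 t = / 2 * (Delta v K t * Delta w K t).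
Proof. intros HK Ht.
  assert (P3 : pw_affine (S K) (Delta v K) (dDelta v K)) by (apply pw_affine_Delta; lia).
  assert (P4 : pw_affine (S K) (Delta w K) (dDelta w K)) by (apply pw_affine_Delta; lia).
  pose proof (RInt_pw_affine_by_parts _ _ _ _ _ t P3 P4 Ht) as PR. rewrite Delta_at_0 in PR.
  rewrite (RInt_ext_R (fun s => dDelta v K s * Delta w K s) (fun s => Delta v K s * dDelta w K s)) in PR
    by (intros; rewrite Delta_sym; auto).
  lra. Qed.

Lemma scalar_integral_0 t : scalar_integral 0 t = 0.
Proof. unfold scalar_integral. apply RInt_zero_R. intros; simpl; ring. Qed.

Lemma scalar_integral_expand N t : 0 <= t <= 1 ->
  scalar_integral (S N) t =
    fsum (S N) (fun p => RInt (fun s => Delta v p s * dSS w p s) 0 t - RInt (fun s => dSS v p s * Delta w p s) 0 t)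
    + RInt (fun s => Delta v 0 s * dDelta w 0 s) 0 t
    + / 2 * fsum N (fun p => Delta v (S p) t * Delta w (S p) t)
    + fsum (S N) (fun p => SS v p t * Delta w p t).
Proof. intros Ht. induction N.
  - pose proof (scalar_integral_succ 0 t Ht). rewrite scalar_integral_0 in H. cbn [fsum]. lra.
  - pose proof (scalar_integral_succ (S N) t Ht). rewrite RInt_Delta_dDelta in H by (auto; lia).
    cbn [fsum] in *. lra. Qed.

Lemma RInt_Delta_dDelta_0 t : 0 <= t <= 1 ->
  RInt (fun s => Delta v 0 s * dDelta w 0 s) 0 t =
  fsum 2 (fun m => fsum 2 (fun k => coef v 0 m * coef w 0 k * Rint (fun s => phi 0 m s * chi 0 k s) 0 t)).
Proof. intros Ht.
  assert (EX : forall m k, ex_RInt (fun s => phi 0 m s * chi 0 k s) 0 t).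
  { intros m k. eapply (ex_RInt_pw_affine_l 1 (phi 0 m) (chi 0 m) (phi 0 k) (chi 0 k)); auto; apply pw_affine_phi; lia. }
  rewrite (RInt_ext_R _ (fun s => fsum 2 (fun m => fsum 2 (fun k => coef v 0 m * coef w 0 k * (phi 0 m s * chi 0 k s))))).
  2: { intros s. unfold Delta, dDelta. change (S (2 ^ 0)) with 2%nat. rewrite fsum_mul.
       apply fsum_ext; intros; apply fsum_ext; intros; ring. }
  rewrite RInt_fsum. apply fsum_ext; intros m _. rewrite RInt_fsum. apply fsum_ext; intros k _.
  rewrite RInt_scal_R by auto. rewrite Rint_RInt by auto. auto.
  intros; apply ex_RInt_scal_R; auto.
  intros m _. apply ex_RInt_fsum. intros; apply ex_RInt_scal_R; auto. Qed.
End ScalarIntegral.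

Lemma Iapprox_decomposition d v w N i t : 0 <= t <= 1 ->
  Iapprox d v w N i t = Lpart d v w (S N) i t + Spart d v w N i t + Ppart d v w (S N) i t.
Proof. intros Ht.
  assert (HI : Iapprox d v w N i t = fsum d (fun j =>
    fsum (S N) (fun p => RInt (fun s => Delta (v i j) p s * dSS (w j) p s) 0 t - RInt (fun s => dSS (v i j) p s * Delta (w j) p s) 0 t)
    + RInt (fun s => Delta (v i j) 0 s * dDelta (w j) 0 s) 0 t
    + / 2 * fsum N (fun p => Delta (v i j) (S p) t * Delta (w j) (S p) t)
    + fsum (S N) (fun p => SS (v i j) p t * Delta (w j) p t))).
  { unfold Iapprox. apply fsum_ext. intros j _. rewrite <- scalar_integral_expand by auto. unfold scalar_integral.
    rewrite Rint_RInt. auto. apply (ex_RInt_pw_affine_l (S N) (SS (v i j) (S N)) (dSS (v i j) (S N)) (SS (w j) (S N)) (dSS (w j) (S N))); auto; apply pw_affine_SS; lia. }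
  assert (HL : Lpart d v w (S N) i t = fsum (S N) (fun p => fsum d (fun j =>
     RInt (fun s => Delta (v i j) p s * dSS (w j) p s) 0 t - RInt (fun s => dSS (v i j) p s * Delta (w j) p s) 0 t))).
  { unfold Lpart. apply fsum_ext. intros p _. apply fsum_ext. intros j _.
       assert (P1 : pw_affine (S p) (Delta (v i j) p) (dDelta (v i j) p)) by (apply pw_affine_Delta; lia).
       assert (P2 : pw_affine (S p) (SS (w j) p) (dSS (w j) p)) by (apply pw_affine_SS; lia).
       assert (P3 : pw_affine (S p) (SS (v i j) p) (dSS (v i j) p)) by (apply pw_affine_SS; lia).
       assert (P4 : pw_affine (S p) (Delta (w j) p) (dDelta (w j) p)) by (apply pw_affine_Delta; lia).
       rewrite !Rint_RInt. auto. eapply ex_RInt_pw_affine_r; eauto. eapply ex_RInt_pw_affine_l; eauto. }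
  assert (HS : Spart d v w N i t = fsum d (fun j => RInt (fun s => Delta (v i j) 0 s * dDelta (w j) 0 s) 0 t)
     + / 2 * fsum N (fun p => fsum d (fun j => Delta (v i j) (S p) t * Delta (w j) (S p) t))).
  { unfold Spart. f_equal. apply fsum_ext. intros j _. rewrite RInt_Delta_dDelta_0; auto. }
  rewrite HI, HL, HS. unfold Ppart.
  rewrite !fsum_plus. rewrite fsum_scal.
  rewrite (fsum_swap d (S N) (fun j p => RInt (fun s => Delta (v i j) p s * dSS (w j) p s) 0 t - RInt (fun s => dSS (v i j) p s * Delta (w j) p s) 0 t)).
  rewrite (fsum_swap d N (fun j p => Delta (v i j) (S p) t * Delta (w j) (S p) t)).
  rewrite (fsum_swap d (S N) (fun j p => SS (v i j) p t * Delta (w j) p t)).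
  ring. Qed.

(** * Estimates *)

Lemma Rpower2_bounds a : 0 < a < 1 -> 1 < Rpower 2 a < 2.
Proof. intros H. split.
  - rewrite <- (Rpower_O 2) at 1 by lra. apply Rpower_lt; lra.
  - rewrite <- (Rpower_1 2) at 2 by lra. apply Rpower_lt; lra. Qed.

Lemma Rpower2_INR_mul a p : Rpower 2 (INR p * a) = Rpower 2 a ^ p.
Proof. rewrite Rmult_comm, <- Rpower_mult. apply Rpower_pow. unfold Rpower. apply exp_pos. Qed.

Lemma Rpower2_mul_gt2 a b : 1 < a + b -> 2 < Rpower 2 a * Rpower 2 b.
Proof. intros H. rewrite <- Rpower_plus. rewrite <- (Rpower_1 2) at 1 by lra. apply Rpower_lt; lra. Qed.

Lemma holder_bound_nonneg a K c0 c : holder_bound a K c0 c -> 0 <= c0 -> 0 <= K.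
Proof. intros [H _] H0. pose proof (exp_pos (- a * ln 2)). unfold Rpower in H. nra. Qed.

Lemma mat_holder_family n d a v K i : 0 < a < 1 -> mat_holder n d a v K -> (i < n)%nat -> holder_family (Rpower 2 a) d (v i) K.
Proof. intros Ha [H0 H] Hi. pose proof (Rpower2_bounds a Ha) as Hr. split.
  - eapply Rle_trans. apply (fmax_ge n (fun i => fsum d (fun j => Rabs (v i j 0))) i Hi).
    rewrite Rpower_Ropp in H0. unfold mnorm in H0.
    apply (Rmult_le_reg_l (/ Rpower 2 a)). apply Rinv_0_lt_compat; lra.
    rewrite <- Rmult_assoc, Rinv_l, Rmult_1_l by lra. auto.
  - intros p m Hm. specialize (H p m Hm). rewrite Rpower2_INR_mul in H.
    eapply Rle_trans. apply (fmax_ge n (fun i => fsum d (fun j => Rabs (coef (v i j) p m))) i Hi).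
    unfold mnorm in H. assert (0 < Rpower 2 a ^ p) by (apply pow_lt; lra).
    apply (Rmult_le_reg_l (Rpower 2 a ^ p)); auto. unfold Rdiv. rewrite <- Rmult_assoc.
    rewrite (Rmult_comm _ K), Rmult_assoc, Rinv_r, Rmult_1_r by lra. auto. Qed.

Lemma vec_holder_family d b w K j : 0 < b < 1 -> vec_holder d b w K -> (j < d)%nat -> holder_family (Rpower 2 b) 1 (fun _ => w j) K.
Proof. intros Hb [H0 H] Hj. pose proof (Rpower2_bounds b Hb) as Hr. split.
  - simpl. rewrite Rplus_0_l. eapply Rle_trans. apply (fmax_ge d (fun j => Rabs (w j 0)) j Hj).
    rewrite Rpower_Ropp in H0. unfold vnorm in H0.
    apply (Rmult_le_reg_l (/ Rpower 2 b)). apply Rinv_0_lt_compat; lra.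
    rewrite <- Rmult_assoc, Rinv_l, Rmult_1_l by lra. auto.
  - intros p m Hm. specialize (H p m Hm). rewrite Rpower2_INR_mul in H. simpl. rewrite Rplus_0_l.
    eapply Rle_trans. apply (fmax_ge d (fun j => Rabs (coef (w j) p m)) j Hj).
    unfold vnorm in H. assert (0 < Rpower 2 b ^ p) by (apply pow_lt; lra).
    apply (Rmult_le_reg_l (Rpower 2 b ^ p)); auto. unfold Rdiv. rewrite <- Rmult_assoc.
    rewrite (Rmult_comm _ K), Rmult_assoc, Rinv_r, Rmult_1_r by lra. auto. Qed.

Lemma mat_holder_nonneg n d a v K : mat_holder n d a v K -> 0 <= K.
Proof. intros H. eapply holder_bound_nonneg; [apply H|]. apply fmax_nonneg. Qed.
Lemma vec_holder_nonneg d b w K : vec_holder d b w K -> 0 <= K.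
Proof. intros H. eapply holder_bound_nonneg; [apply H|]. apply fmax_nonneg. Qed.

Lemma vnorm_eq0 n0 f : (forall i, (i < n0)%nat -> f i = 0) -> vnorm n0 f = 0.
Proof. intros H. unfold vnorm. apply Rle_antisym. apply fmax_le; [lra|]. intros m Hm. rewrite H; auto. rewrite Rabs_R0; lra.
  apply fmax_nonneg. Qed.

Section Estimates.
Variables (a b : R) (n d : nat) (v : nat -> nat -> R -> R) (w : nat -> R -> R) (Kv Kw : R).
Hypotheses (Ha : 0 < a < 1) (Hb : 0 < b < 1) (Hab : 1 < a + b).
Hypotheses (HV : mat_holder n d a v Kv) (HW : vec_holder d b w Kw).

Let ra := Rpower 2 a.
Let rb := Rpower 2 b.
Let tau := / (ra * rb).

Lemma ra_bounds : 1 < ra < 2. Proof. apply Rpower2_bounds; auto. Qed.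
Lemma rb_bounds : 1 < rb < 2. Proof. apply Rpower2_bounds; auto. Qed.
Lemma Kv_nonneg : 0 <= Kv. Proof. apply (mat_holder_nonneg n d a v Kv HV). Qed.
Lemma Kw_nonneg : 0 <= Kw. Proof. apply (vec_holder_nonneg d b w Kw HW). Qed.

Lemma tau_bounds : 0 < tau /\ 2 * tau < 1 /\ 1 < 4 * tau.
Proof. unfold tau. pose proof (Rpower2_mul_gt2 a b Hab). fold ra rb in H. pose proof ra_bounds. pose proof rb_bounds.
  assert (0 < ra * rb) by nra. repeat split.
  apply Rinv_0_lt_compat; auto.
  apply (Rmult_lt_reg_r (ra * rb)); auto. rewrite Rmult_assoc, Rinv_l; lra.
  apply (Rmult_lt_reg_r (ra * rb)); auto. rewrite Rmult_assoc, Rinv_l; nra. Qed.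

Lemma inv_rb_pow_succ_le q : / rb ^ S q <= / rb ^ q.
Proof. pose proof rb_bounds. apply Rinv_le_contravar. apply pow_lt; lra. simpl. assert (0 < rb ^ q) by (apply pow_lt; lra). nra. Qed.

Lemma tau_pow_le_inv_rb q : tau ^ q <= / rb ^ q.
Proof. pose proof ra_bounds. pose proof rb_bounds. unfold tau. rewrite pow_inv, Rpow_mult_distr.
  apply Rinv_le_contravar. apply pow_lt; lra. assert (1 <= ra ^ q) by (apply pow_R1_Rle; lra).
  assert (0 < rb ^ q) by (apply pow_lt; lra). nra. Qed.

Lemma tau_pow_succ_le q : tau ^ S q <= tau ^ q.
Proof. pose proof tau_bounds. simpl. assert (0 <= tau ^ q) by (apply pow_le; lra). nra. Qed.

Lemma v_family i : (i < n)%nat -> holder_family ra d (v i) Kv.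
Proof. intros Hi. apply (mat_holder_family n d a v Kv i Ha HV Hi). Qed.
Lemma w_family j : (j < d)%nat -> holder_family rb 1 (fun _ => w j) Kw.
Proof. intros Hj. apply (vec_holder_family d b w Kw j Hb HW Hj). Qed.

Lemma v_coef i j p : (i < n)%nat -> (j < d)%nat -> coef_abs_le (v i j) p (Kv / ra ^ p).
Proof. intros Hi Hj. apply (holder_family_coef ra d (v i) Kv j); auto. apply (v_family i Hi). Qed.
Lemma w_coef j p : (j < d)%nat -> coef_abs_le (w j) p (Kw / rb ^ p).
Proof. intros Hj. pose proof (holder_family_coef rb 1 (fun _ => w j) Kw 0 (w_family j Hj) ltac:(lia) p). auto. Qed.
Lemma v_at0 i j : (i < n)%nat -> (j < d)%nat -> Rabs (v i j 0) <= ra * Kv.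
Proof. intros Hi Hj. apply (holder_family_at0 ra d (v i) Kv j); auto. apply (v_family i Hi). Qed.

Definition L_const := 4 * Kv * Kw * (/ (2 / rb - 1) + / (2 / ra - 1)).

Lemma Lpart_succ_sub_le P i t : (i < n)%nat -> 0 <= t <= 1 ->
  Rabs (Lpart d v w (S P) i t - Lpart d v w P i t) <= (INR d * L_const) * (2 * tau) ^ P.
Proof. intros Hi Ht. unfold Lpart. cbn [fsum]. replace (fsum P _ + _ - fsum P _) with
    (fsum d (fun j => Rint (fun s => Delta (v i j) P s * dSS (w j) P s) 0 t - Rint (fun s => dSS (v i j) P s * Delta (w j) P s) 0 t)) by ring.
  eapply Rle_trans; [apply fsum_abs_le|]. rewrite Rmult_assoc, <- fsum_const. apply fsum_le. intros j Hj.
  pose proof ra_bounds. pose proof rb_bounds. pose proof Kv_nonneg. pose proof Kw_nonneg. pose proof (ratio_gt1 ra ra_bounds). pose proof (ratio_gt1 rb rb_bounds).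
  assert (P1 : pw_affine (S P) (Delta (v i j) P) (dDelta (v i j) P)) by (apply pw_affine_Delta; lia).
  assert (P2 : pw_affine (S P) (SS (w j) P) (dSS (w j) P)) by (apply pw_affine_SS; lia).
  assert (P3 : pw_affine (S P) (SS (v i j) P) (dSS (v i j) P)) by (apply pw_affine_SS; lia).
  assert (P4 : pw_affine (S P) (Delta (w j) P) (dDelta (w j) P)) by (apply pw_affine_Delta; lia).
  assert (E1 := ex_RInt_pw_affine_l _ _ _ _ _ t P1 P2 Ht). assert (E2 := ex_RInt_pw_affine_r _ _ _ _ _ t P3 P4 Ht).
  rewrite !Rint_RInt by auto.
  assert (B1 : Rabs (RInt (fun s => Delta (v i j) P s * dSS (w j) P s) 0 t) <=
     (2 * (Kv / ra ^ P)) * (2 * Kw * ((2 / rb) ^ P / (2 / rb - 1)))).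
  { apply RInt_0_abs_le; auto. intros y Hy. apply Rabs_mul_le.
    apply Delta_abs_le; auto. apply v_coef; auto. apply (div_pow_nonneg ra ra_bounds); auto.
    apply (dSS_abs_le rb rb_bounds); auto. intros; apply w_coef; auto. }
  assert (B2 : Rabs (RInt (fun s => dSS (v i j) P s * Delta (w j) P s) 0 t) <=
     (2 * Kv * ((2 / ra) ^ P / (2 / ra - 1))) * (2 * (Kw / rb ^ P))).
  { apply RInt_0_abs_le; auto. intros y Hy. apply Rabs_mul_le.
    apply (dSS_abs_le ra ra_bounds); auto. intros; apply v_coef; auto.
    apply Delta_abs_le; auto. apply w_coef; auto. apply (div_pow_nonneg rb rb_bounds); auto. }
  eapply Rle_trans. unfold Rminus. eapply Rle_trans; [apply Rabs_triang|]. rewrite Rabs_Ropp.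
  apply Rplus_le_compat; [apply B1|apply B2].
  right. unfold L_const, tau. unfold Rdiv. rewrite !Rpow_mult_distr, !pow_inv, Rpow_mult_distr.
  field. repeat split; try apply pow_nonzero; lra. Qed.

Lemma Spart_succ_sub_le P i t : (i < n)%nat -> 0 <= t <= 1 ->
  Rabs (Spart d v w (S P) i t - Spart d v w P i t) <= (INR d * (2 * Kv * Kw)) * tau ^ P.
Proof. intros Hi Ht. unfold Spart, tau. cbn [fsum].
  replace (_ + _ - _) with (/ 2 * fsum d (fun j => Delta (v i j) (S P) t * Delta (w j) (S P) t)) by ring.
  pose proof ra_bounds. pose proof rb_bounds.
  pose proof Kv_nonneg. pose proof Kw_nonneg.
  rewrite Rabs_mult, Rabs_right by lra.
  replace (INR d * (2 * Kv * Kw) * (/ (ra * rb)) ^ P) with (/ 2 * (INR d * (4 * Kv * Kw * (/ (ra * rb)) ^ P))) by field.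
  apply Rmult_le_compat_l; [lra|].
  eapply Rle_trans; [apply fsum_abs_le|]. rewrite <- fsum_const. apply fsum_le. intros j Hj.
  eapply Rle_trans. apply Rabs_mul_le.
  apply (Delta_abs_le _ _ (Kv / ra ^ S P)); auto. apply v_coef; auto. apply (div_pow_nonneg ra ra_bounds); auto.
  apply (Delta_abs_le _ _ (Kw / rb ^ S P)); auto. apply w_coef; auto. apply (div_pow_nonneg rb rb_bounds); auto.
  assert (0 < ra ^ P) by (apply pow_lt; lra). assert (0 < rb ^ P) by (apply pow_lt; lra).
  rewrite pow_inv, Rpow_mult_distr. simpl pow.
  replace (2 * (Kv / (ra * ra ^ P)) * (2 * (Kw / (rb * rb ^ P)))) with
     ((4 * Kv * Kw * / (ra ^ P * rb ^ P)) * / (ra * rb)) by (field; repeat split; lra).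
  rewrite <- (Rmult_1_r (4 * Kv * Kw * / (ra ^ P * rb ^ P))) at 2.
  apply Rmult_le_compat_l. apply Rmult_le_pos. nra. left; apply Rinv_0_lt_compat; nra.
  rewrite <- Rinv_1. apply Rinv_le_contravar; nra. Qed.

Definition P_const := 2 * Kw * (ra * Kv + 2 * Kv / (1 - / ra)).

Lemma Ppart_succ_sub_le P i t : (i < n)%nat -> 0 <= t <= 1 ->
  Rabs (Ppart d v w (S P) i t - Ppart d v w P i t) <= (INR d * P_const) * (/ rb) ^ P.
Proof. intros Hi Ht. unfold Ppart. cbn [fsum].
  replace (_ + _ - _) with (fsum d (fun j => SS (v i j) P t * Delta (w j) P t)) by ring.
  pose proof ra_bounds. pose proof rb_bounds.
  pose proof Kv_nonneg. pose proof Kw_nonneg.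
  eapply Rle_trans; [apply fsum_abs_le|]. rewrite Rmult_assoc, <- fsum_const. apply fsum_le. intros j Hj.
  eapply Rle_trans. apply Rabs_mul_le.
  apply (SS_abs_le ra ra_bounds _ Kv); auto. intros; apply v_coef; auto.
  apply (Delta_abs_le _ _ (Kw / rb ^ P)); auto. apply w_coef; auto. apply (div_pow_nonneg rb rb_bounds); auto.
  pose proof (v_at0 i j Hi Hj).
  assert (0 <= 2 * Kv / (1 - / ra)).
  { apply Rmult_le_pos; [lra|]. left. apply Rinv_0_lt_compat. pose proof (inv_lt1 ra ra_bounds). lra. }
  unfold P_const. rewrite pow_inv.
  replace (2 * Kw * (ra * Kv + 2 * Kv / (1 - / ra)) * / rb ^ P) with
    ((ra * Kv + 2 * Kv / (1 - / ra)) * (2 * (Kw / rb ^ P))) by (unfold Rdiv; ring).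
  assert (0 <= Kw / rb ^ P) by (apply (div_pow_nonneg rb rb_bounds); auto).
  apply Rmult_le_compat_r; lra. Qed.

Lemma L_const_nonneg : 0 <= L_const.
Proof. unfold L_const. pose proof Kv_nonneg. pose proof Kw_nonneg.
  pose proof (ratio_gt1 _ ra_bounds). pose proof (ratio_gt1 _ rb_bounds).
  assert (0 < / (2 / rb - 1)) by (apply Rinv_0_lt_compat; lra).
  assert (0 < / (2 / ra - 1)) by (apply Rinv_0_lt_compat; lra).
  apply Rmult_le_pos; [nra|lra]. Qed.

Lemma partial_sums_unif_cv : exists Lf Sf Pf : nat -> R -> R,
  unif_cv01 n (fun P => Lpart d v w P) Lf /\ unif_cv01 n (fun P => Spart d v w P) Sf /\
  unif_cv01 n (fun P => Ppart d v w P) Pf.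
Proof.
  pose proof ra_bounds. pose proof rb_bounds.
  pose proof Kv_nonneg. pose proof Kw_nonneg. pose proof (pos_INR d).
  pose proof (inv_lt1 rb rb_bounds). pose proof tau_bounds.
  destruct (unif_cv01_geom n (fun P => Lpart d v w P) (INR d * L_const) (2 * tau)) as [Lf HL].
  apply Rmult_le_pos; auto. apply L_const_nonneg. lra.
  intros; apply Lpart_succ_sub_le; auto.
  destruct (unif_cv01_geom n (fun P => Spart d v w P) (INR d * (2 * Kv * Kw)) tau) as [Sf HS].
  apply Rmult_le_pos; auto. nra. lra.
  intros; apply Spart_succ_sub_le; auto.
  destruct (unif_cv01_geom n (fun P => Ppart d v w P) (INR d * P_const) (/ rb)) as [Pf HP].
  apply Rmult_le_pos; auto. unfold P_const.
  assert (0 <= 2 * Kv / (1 - / ra)).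
  { apply Rmult_le_pos; [lra|]. left. apply Rinv_0_lt_compat. pose proof (inv_lt1 ra ra_bounds). lra. }
  apply Rmult_le_pos; nra. split; [left; apply Rinv_0_lt_compat; lra| auto].
  intros; apply Ppart_succ_sub_le; auto.
  exists Lf, Sf, Pf. auto. Qed.

Lemma Iapprox_cont N i : (i < n)%nat -> cont01 (Iapprox d v w N i).
Proof. intros Hi. apply Lip01_cont. unfold Iapprox.
  apply (Lip01_fsum d (fun j t => Rint (fun s => SS (v i j) (S N) s * dSS (w j) (S N) s) 0 t)).
  intros j Hj.
  pose proof ra_bounds. pose proof rb_bounds.
  pose proof Kv_nonneg. pose proof Kw_nonneg.
  pose proof (ratio_gt1 _ rb_bounds).
  assert (0 <= 2 * Kv / (1 - / ra)).
  { apply Rmult_le_pos; [lra|]. left. apply Rinv_0_lt_compat. pose proof (inv_lt1 ra ra_bounds). lra. }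
  assert (0 <= 2 * Kw * ((2 / rb) ^ S N / (2 / rb - 1))).
  { apply Rmult_le_pos; [lra|]. apply Rmult_le_pos. apply pow_le; lra. left; apply Rinv_0_lt_compat; lra. }
  apply (Lip01_Rint (S N) _ (dSS (v i j) (S N)) (SS (w j) (S N)) _
     ((Rabs (v i j 0) + 2 * Kv / (1 - / ra)) * (2 * Kw * ((2 / rb) ^ S N / (2 / rb - 1))))).
  apply pw_affine_SS; lia. apply pw_affine_SS; lia. pose proof (Rabs_pos (v i j 0)). apply Rmult_le_pos; lra.
  intros x Hx. apply Rabs_mul_le.
  apply (SS_abs_le ra ra_bounds _ Kv); auto. intros; apply v_coef; auto.
  apply (dSS_abs_le rb rb_bounds); auto. intros; apply w_coef; auto. Qed.

Lemma Iapprox_unif_cv : exists I Lf Sf Pf : nat -> R -> R,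
      unif_cv01 n (fun N => Iapprox d v w N) I /\
      pw_cv01 n (fun P => Lpart d v w P) Lf /\
      pw_cv01 n (fun P => Spart d v w P) Sf /\
      pw_cv01 n (fun P => Ppart d v w P) Pf /\
      (forall i t, (i < n)%nat -> 0 <= t <= 1 -> I i t = Lf i t + Sf i t + Pf i t) /\
      vec_cont01 n I /\
      vec_cont01 n (fun i t => I i t - Pf i t).
Proof. destruct partial_sums_unif_cv as [Lf [Sf [Pf [HL [HS HP]]]]].
  set (I := fun i t => Lf i t + Sf i t + Pf i t).
  assert (HI : unif_cv01 n (fun N => Iapprox d v w N) I).
  { apply (unif_cv01_sum3 n (fun N => Lpart d v w (S N)) (fun N => Spart d v w N) (fun N => Ppart d v w (S N))).
    apply (unif_cv01_shift n (fun P => Lpart d v w P)); auto. auto. apply (unif_cv01_shift n (fun P => Ppart d v w P)); auto.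
    intros; apply Iapprox_decomposition; auto. }
  assert (HIc : vec_cont01 n I).
  { apply (unif_cv01_cont n (fun N => Iapprox d v w N)); auto. intros; apply Iapprox_cont; auto. }
  assert (HcontP : vec_cont01 n Pf).
  { apply (unif_cv01_cont n (fun P => Ppart d v w P)); auto. intros; apply Lip01_cont, Lip01_Ppart. }
  exists I, Lf, Sf, Pf. repeat split; try apply unif_cv01_pw; auto.
  intros i Hi. apply cont01_sub; auto. Qed.

Definition v_incr_const := incr_const ra.
Definition w_incr_const := incr_const rb.
Definition v_sup_const := sup_const ra.
Lemma v_sup_const_pos : 0 < v_sup_const. Proof. apply sup_const_pos, ra_bounds. Qed.
Lemma v_incr_const_ge1 : 1 <= v_incr_const. Proof. apply incr_const_ge1, ra_bounds. Qed.
Lemma w_incr_const_ge1 : 1 <= w_incr_const. Proof. apply incr_const_ge1, rb_bounds. Qed.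

Lemma v_incr i r k : (i < n)%nat -> (k < 2 ^ r)%nat ->
  fsum d (fun j => Rabs (v i j (dyad r (S k)) - v i j (dyad r k))) <= v_incr_const * Kv / ra ^ r.
Proof. intros Hi Hk. apply (holder_family_incr ra ra_bounds d (v i) Kv r k); auto. apply (v_family i Hi). apply Kv_nonneg. Qed.

Lemma w_incr j r k : (j < d)%nat -> (k < 2 ^ r)%nat ->
  Rabs (w j (dyad r (S k)) - w j (dyad r k)) <= w_incr_const * Kw / rb ^ r.
Proof. intros Hj Hk. pose proof (holder_family_incr rb rb_bounds 1 (fun _ => w j) Kw r k (w_family j Hj) Kw_nonneg Hk).
  simpl in H. rewrite Rplus_0_l in H. auto. Qed.

Lemma v_sup i r k : (i < n)%nat -> (1 <= r)%nat -> (k <= 2 ^ r)%nat ->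
  fsum d (fun j => Rabs (v i j (dyad r k))) <= v_sup_const * Kv.
Proof. intros Hi Hr Hk. apply (holder_family_sup ra ra_bounds d (v i) Kv r k); auto. apply (v_family i Hi). apply Kv_nonneg. Qed.

Definition trapezoid i x y := fsum d (fun j => (v i j x + v i j y) / 2 * (w j y - w j x)).
Definition trapezoid_defect M i x y := Iapprox d v w M i y - Iapprox d v w M i x - trapezoid i x y.

Lemma trapezoid_defect_finest M i k : (k < 2 ^ S M)%nat -> trapezoid_defect M i (dyad (S M) k) (dyad (S M) (S k)) = 0.
Proof. intros Hk. unfold trapezoid_defect, trapezoid, Iapprox. rewrite <- fsum_minus, <- fsum_minus.
  apply fsum_eq0. intros j Hj.
  assert (P1 : pw_affine (S M) (SS (v i j) (S M)) (dSS (v i j) (S M))) by (apply pw_affine_SS; lia).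
  assert (P2 : pw_affine (S M) (SS (w j) (S M)) (dSS (w j) (S M))) by (apply pw_affine_SS; lia).
  assert (Hx : 0 <= dyad (S M) k <= 1) by (split; [apply dyad_nonneg|apply dyad_le1; lia]).
  assert (Hy : 0 <= dyad (S M) (S k) <= 1) by (split; [apply dyad_nonneg|apply dyad_le1; lia]).
  rewrite !Rint_RInt by (eapply ex_RInt_pw_affine_l; eauto).
  rewrite RInt_sub_0 by (eapply ex_RInt_pw_affine_l; eauto).
  rewrite (is_RInt_unique_R _ _ _ _ (is_RInt_pw_affine_trapezoid _ _ _ _ _ k P1 P2 Hk)).
  rewrite !SS_dyad by lia. ring. Qed.

Definition split_const := v_incr_const * w_incr_const * Kv * Kw.

Lemma incr_prod_le i r k k' : (i < n)%nat -> (k < 2 ^ r)%nat -> (k' < 2 ^ r)%nat ->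
  Rabs (fsum d (fun j => (v i j (dyad r (S k)) - v i j (dyad r k)) * (w j (dyad r (S k')) - w j (dyad r k'))))
  <= split_const * tau ^ r.
Proof. intros Hi Hk Hk'. pose proof Kw_nonneg. pose proof w_incr_const_ge1. pose proof ra_bounds. pose proof rb_bounds.
  eapply Rle_trans.
  { apply fsum_abs_mul_bound; [apply v_incr; auto| intros j Hj; apply w_incr; auto|].
    apply Rdiv_le_0_compat; [nra|apply pow_lt; lra]. }
  right. unfold split_const, tau. rewrite pow_inv, Rpow_mult_distr. field. split; apply pow_nonzero; lra. Qed.

Lemma trapezoid_split i x c y : trapezoid i x c + trapezoid i c y - trapezoid i x y =
  / 2 * (fsum d (fun j => (v i j c - v i j x) * (w j y - w j c)) - fsum d (fun j => (v i j y - v i j c) * (w j c - w j x))).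
Proof. unfold trapezoid. rewrite <- fsum_plus, <- !fsum_minus, <- fsum_scal. apply fsum_ext; intros; field. Qed.

Lemma trapezoid_split_le i r k : (i < n)%nat -> (k < 2 ^ r)%nat ->
  Rabs (trapezoid i (dyad (S r) (2 * k)) (dyad (S r) (S (2 * k))) + trapezoid i (dyad (S r) (S (2 * k))) (dyad (S r) (S (S (2 * k))))
        - trapezoid i (dyad (S r) (2 * k)) (dyad (S r) (S (S (2 * k))))) <= split_const * tau ^ S r.
Proof. intros Hi Hk. rewrite trapezoid_split.
  pose proof (incr_prod_le i (S r) (2 * k) (S (2 * k)) Hi ltac:(simpl; lia) ltac:(simpl; lia)) as B1.
  pose proof (incr_prod_le i (S r) (S (2 * k)) (2 * k) Hi ltac:(simpl; lia) ltac:(simpl; lia)) as B2.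
  rewrite Rabs_mult, (Rabs_right (/ 2)) by lra.
  eapply Rle_trans; [apply Rmult_le_compat_l; [lra|apply Rabs_sub_le]|]. lra. Qed.

Definition defect_const := v_incr_const * w_incr_const * tau / (1 - 2 * tau).
Lemma defect_const_nonneg : 0 <= defect_const.
Proof. pose proof tau_bounds. pose proof v_incr_const_ge1. pose proof w_incr_const_ge1. unfold defect_const.
  unfold Rdiv. apply Rmult_le_pos. apply Rmult_le_pos; [nra|lra]. left; apply Rinv_0_lt_compat; lra. Qed.

Definition defect_bound := defect_const * Kv * Kw.

Lemma defect_bound_eq : defect_bound * (1 - 2 * tau) = split_const * tau.
Proof. unfold defect_bound, defect_const, split_const. pose proof tau_bounds. field. lra. Qed.

Lemma defect_bound_nonneg : 0 <= defect_bound.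
Proof. pose proof defect_const_nonneg. pose proof Kv_nonneg. pose proof Kw_nonneg.
  unfold defect_bound. apply Rmult_le_pos; [apply Rmult_le_pos|]; auto. Qed.

(* Discrete sewing: induction from the finest grid, where the defect vanishes, towards coarser
   intervals, each halving adding [trapezoid_split_le]; the sum is geometric because 2 tau < 1. *)
Lemma trapezoid_defect_le M i : (i < n)%nat -> forall nl r k, (r + nl = S M)%nat -> (k < 2 ^ r)%nat ->
  Rabs (trapezoid_defect M i (dyad r k) (dyad r (S k))) <= defect_bound * tau ^ r.
Proof. intros Hi nl. induction nl; intros r k Hr Hk.
  - rewrite Nat.add_0_r in Hr. subst r. rewrite trapezoid_defect_finest by auto. rewrite Rabs_R0.
    apply Rmult_le_pos. apply defect_bound_nonneg. apply pow_le. pose proof tau_bounds; lra.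
  - assert (E1 := IHnl (S r) (2 * k)%nat ltac:(lia) ltac:(simpl; lia)).
    assert (E2 := IHnl (S r) (S (2 * k)) ltac:(lia) ltac:(simpl; lia)).
    pose proof (trapezoid_split_le i r k Hi Hk) as DB.
    rewrite <- (dyad_double r k), <- (dyad_double r (S k)). replace (2 * S k)%nat with (S (S (2 * k))) by lia.
    unfold trapezoid_defect in *.
    set (x := dyad (S r) (2 * k)) in *. set (c := dyad (S r) (S (2 * k))) in *. set (y := dyad (S r) (S (S (2 * k)))) in *.
    replace (Iapprox d v w M i y - Iapprox d v w M i x - trapezoid i x y) with
      ((Iapprox d v w M i c - Iapprox d v w M i x - trapezoid i x c) + (Iapprox d v w M i y - Iapprox d v w M i c - trapezoid i c y)
       + (trapezoid i x c + trapezoid i c y - trapezoid i x y)) by ring.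
    eapply Rle_trans. eapply Rle_trans; [apply Rabs_triang|]. apply Rplus_le_compat; [apply Rabs_triang|apply DB].
    assert (Hfix : defect_bound = 2 * defect_bound * tau + split_const * tau)
      by (rewrite <- defect_bound_eq; ring).
    replace (defect_bound * tau ^ r) with (defect_bound * tau ^ S r + defect_bound * tau ^ S r + split_const * tau ^ S r)
      by (simpl pow; rewrite Hfix at 3; ring).
    lra. Qed.

Variable I : nat -> R -> R.
Hypothesis HI : forall i t, (i < n)%nat -> 0 <= t <= 1 -> Un_cv (fun N => Iapprox d v w N i t) (I i t).

Lemma I_trapezoid_defect_le i r k : (i < n)%nat -> (k < 2 ^ r)%nat ->
  Rabs (I i (dyad r (S k)) - I i (dyad r k) - trapezoid i (dyad r k) (dyad r (S k))) <= defect_bound * tau ^ r.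
Proof. intros Hi Hk.
  assert (Hx : 0 <= dyad r k <= 1) by (split; [apply dyad_nonneg|apply dyad_le1; lia]).
  assert (Hy : 0 <= dyad r (S k) <= 1) by (split; [apply dyad_nonneg|apply dyad_le1; lia]).
  assert (CV : Un_cv (fun M => trapezoid_defect M i (dyad r k) (dyad r (S k))) (I i (dyad r (S k)) - I i (dyad r k) - trapezoid i (dyad r k) (dyad r (S k)))).
  { unfold trapezoid_defect. apply CV_minus. apply CV_minus; apply HI; auto.
    intros eps He. exists 0%nat. intros; unfold R_dist. rewrite Rminus_diag, Rabs_R0; auto. }
  replace (I i (dyad r (S k)) - I i (dyad r k) - trapezoid i (dyad r k) (dyad r (S k))) with
     ((I i (dyad r (S k)) - I i (dyad r k) - trapezoid i (dyad r k) (dyad r (S k))) - 0) by ring.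
  apply (Un_cv_abs_sub_le _ _ _ _ r CV). intros M HM. rewrite Rminus_0_r.
  apply (trapezoid_defect_le M i Hi (S M - r)); auto; lia. Qed.

Lemma I_at_0 i : (i < n)%nat -> I i 0 = 0.
Proof. intros Hi. apply (UL_sequence (fun N => Iapprox d v w N i 0)). apply HI; auto; lra.
  assert (E : forall N, Iapprox d v w N i 0 = 0).
  { intros N. unfold Iapprox. apply fsum_eq0. intros j _. rewrite Rint_RInt. apply (RInt_point (V := R_CompleteNormedModule)).
    exists 0. apply is_RInt_point_R. }
  intros eps He. exists 0%nat. intros. unfold R_dist. rewrite E, Rminus_diag, Rabs_R0; auto. Qed.

Lemma trapezoid_abs_le i x y Bw : fsum d (fun j => Rabs (v i j x)) <= v_sup_const * Kv -> fsum d (fun j => Rabs (v i j y)) <= v_sup_const * Kv ->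
  (forall j, (j < d)%nat -> Rabs (w j y - w j x) <= Bw) -> 0 <= Bw -> Rabs (trapezoid i x y) <= v_sup_const * Kv * Bw.
Proof. intros H1 H2 H3 H4. unfold trapezoid. apply fsum_abs_mul_bound; auto.
  eapply Rle_trans. apply (fsum_le _ _ (fun j => / 2 * (Rabs (v i j x) + Rabs (v i j y)))).
  intros j _. unfold Rdiv. rewrite Rabs_mult, (Rabs_right (/2)) by lra. rewrite Rmult_comm.
  apply Rmult_le_compat_l; [lra| apply Rabs_triang].
  rewrite fsum_scal, fsum_plus. lra. Qed.

Definition I_incr_const := v_sup_const * w_incr_const + defect_const.
Definition I_const := 2 * I_incr_const.

Lemma I_incr_const_nonneg : 0 <= I_incr_const.
Proof. pose proof v_sup_const_pos. pose proof w_incr_const_ge1. pose proof defect_const_nonneg. unfold I_incr_const. nra. Qed.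

Lemma I_incr_le i r k : (i < n)%nat -> (1 <= r)%nat -> (k < 2 ^ r)%nat ->
  Rabs (I i (dyad r (S k)) - I i (dyad r k)) <= I_incr_const * Kv * Kw / rb ^ r.
Proof. intros Hi Hr Hk. pose proof Kv_nonneg. pose proof Kw_nonneg. pose proof w_incr_const_ge1.
  pose proof defect_const_nonneg. pose proof rb_bounds. assert (0 < rb ^ r) by (apply pow_lt; lra).
  assert (Htrap : Rabs (trapezoid i (dyad r k) (dyad r (S k))) <= v_sup_const * Kv * (w_incr_const * Kw / rb ^ r)).
  { apply trapezoid_abs_le; try (apply v_sup; auto; lia).
    - intros j Hj. apply w_incr; auto.
    - apply Rdiv_le_0_compat; [nra|lra]. }
  assert (Hdef : defect_bound * tau ^ r <= defect_const * Kv * Kw / rb ^ r).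
  { unfold defect_bound, Rdiv. apply Rmult_le_compat_l; [apply Rmult_le_pos; [apply Rmult_le_pos|]; auto|apply tau_pow_le_inv_rb]. }
  pose proof (I_trapezoid_defect_le i r k Hi Hk) as Hsew.
  replace (I i (dyad r (S k)) - I i (dyad r k)) with
    ((I i (dyad r (S k)) - I i (dyad r k) - trapezoid i (dyad r k) (dyad r (S k))) + trapezoid i (dyad r k) (dyad r (S k))) by ring.
  replace (I_incr_const * Kv * Kw / rb ^ r) with
    (defect_const * Kv * Kw / rb ^ r + v_sup_const * Kv * (w_incr_const * Kw / rb ^ r)) by (unfold I_incr_const; field; lra).
  eapply Rle_trans; [apply Rabs_triang|]. lra. Qed.

Lemma coef_I_le i q m : (i < n)%nat -> (m <= 2 ^ q)%nat ->
  Rabs (coef (I i) q m) <= I_const * Kv * Kw / rb ^ q.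
Proof. intros Hi Hm. pose proof Kv_nonneg. pose proof Kw_nonneg. pose proof I_incr_const_nonneg.
  assert (0 <= I_incr_const * Kv * Kw) by (apply Rmult_le_pos; [apply Rmult_le_pos|]; auto).
  assert (Hinc : forall k, (k < 2 ^ S q)%nat ->
    Rabs (I i (dyad (S q) (S k)) - I i (dyad (S q) k)) <= I_incr_const * Kv * Kw / rb ^ q).
  { intros k Hk. eapply Rle_trans; [apply I_incr_le; auto; lia|].
    unfold Rdiv. apply Rmult_le_compat_l; [auto|apply inv_rb_pow_succ_le]. }
  assert (0 <= I_incr_const * Kv * Kw / rb ^ q).
  { apply Rdiv_le_0_compat; auto. apply pow_lt. pose proof rb_bounds; lra. }
  replace (I_const * Kv * Kw / rb ^ q) with (2 * (I_incr_const * Kv * Kw / rb ^ q)) by (unfold I_const; field;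
    apply pow_nonzero; pose proof rb_bounds; lra).
  destruct m as [|m].
  - destruct q as [|q]; unfold coef; [|rewrite Rabs_R0; lra].
    rewrite <- dyad_1_2, <- dyad_1_0.
    replace (I i (dyad 1 2) - I i (dyad 1 0)) with
      ((I i (dyad 1 2) - I i (dyad 1 1)) + (I i (dyad 1 1) - I i (dyad 1 0))) by ring.
    eapply Rle_trans; [apply Rabs_triang|]. pose proof (Hinc 1%nat ltac:(simpl; lia)). pose proof (Hinc 0%nat ltac:(simpl; lia)). lra.
  - unfold coef. rewrite (t0_S_dyad q m), (t1_S_dyad q m), (t2_S_dyad q m).
    replace (2 * I i (dyad (S q) (S (2 * m))) - I i (dyad (S q) (2 * m)) - I i (dyad (S q) (S (S (2 * m))))) with
      ((I i (dyad (S q) (S (2 * m))) - I i (dyad (S q) (2 * m))) - (I i (dyad (S q) (S (S (2 * m)))) - I i (dyad (S q) (S (2 * m))))) by ring.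
    eapply Rle_trans; [apply Rabs_triang|]. rewrite Rabs_Ropp.
    pose proof (Hinc (2 * m)%nat ltac:(simpl; lia)). pose proof (Hinc (S (2 * m)) ltac:(simpl; lia)). lra. Qed.

Lemma I_const_nonneg : 0 <= I_const.
Proof. pose proof I_incr_const_nonneg. unfold I_const. lra. Qed.

Lemma I_holder C : I_const <= C -> vec_holder n b I (C * Kv * Kw).
Proof. intros HC. pose proof Kv_nonneg. pose proof Kw_nonneg. pose proof I_const_nonneg. split.
  - rewrite vnorm_eq0 by (intros; apply I_at_0; auto). rewrite Rmult_0_r. apply Rmult_le_pos; [apply Rmult_le_pos|]; lra.
  - intros p m Hm. rewrite Rpower2_INR_mul. fold rb. pose proof rb_bounds. assert (0 < rb ^ p) by (apply pow_lt; lra).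
    apply (Rmult_le_reg_r (/ rb ^ p)). apply Rinv_0_lt_compat; auto.
    rewrite Rmult_comm, <- Rmult_assoc, Rinv_l, Rmult_1_l by lra.
    unfold vnorm. apply fmax_le. apply Rmult_le_pos. apply Rmult_le_pos; [apply Rmult_le_pos|]; lra. left; apply Rinv_0_lt_compat; auto.
    intros i Hi. eapply Rle_trans. apply coef_I_le; auto. unfold Rdiv.
    apply Rmult_le_compat_r. left; apply Rinv_0_lt_compat; auto.
    rewrite !Rmult_assoc. apply Rmult_le_compat_r; [apply Rmult_le_pos; lra| lra]. Qed.

Variable Pf : nat -> R -> R.
Hypothesis HP : forall i t, (i < n)%nat -> 0 <= t <= 1 -> Un_cv (fun P => Ppart d v w P i t) (Pf i t).

Definition J i t := I i t - Pf i t.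

Lemma Ppart_succ P i x : Ppart d v w (S P) i x = Ppart d v w P i x + fsum d (fun j => SS (v i j) P x * Delta (w j) P x).
Proof. reflexivity. Qed.

Lemma Ppart_dyad_stable q i k j : Ppart d v w (S q + j) i (dyad (S q) k) = Ppart d v w (S q) i (dyad (S q) k).
Proof. induction j. rewrite Nat.add_0_r; auto.
  replace (S q + S j)%nat with (S (S q + j)) by lia. rewrite Ppart_succ, IHj.
  rewrite fsum_eq0. ring. intros j' _. rewrite Delta_coarse_dyad by lia. ring. Qed.

Lemma Pf_dyad q i k : (i < n)%nat -> (k <= 2 ^ S q)%nat -> Pf i (dyad (S q) k) = Ppart d v w (S q) i (dyad (S q) k).
Proof. intros Hi Hk. apply (UL_sequence (fun P => Ppart d v w P i (dyad (S q) k))).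
  - apply HP; auto. split; [apply dyad_nonneg| apply dyad_le1; auto].
  - intros eps He. exists (S q). intros P HP'. unfold R_dist. replace P with (S q + (P - S q))%nat by lia.
    rewrite Ppart_dyad_stable, Rminus_diag, Rabs_R0; auto. Qed.

Lemma Pf_dyad_1 i k : (i < n)%nat -> (k <= 2)%nat -> Pf i (dyad 1 k) = fsum d (fun j => v i j 0 * (w j (dyad 1 k) - w j 0)).
Proof. intros Hi Hk. rewrite (Pf_dyad 0 i k Hi) by (simpl; lia). rewrite Ppart_succ.
  change (Ppart d v w 0 i (dyad 1 k)) with 0. rewrite Rplus_0_l. apply fsum_ext. intros j _.
  rewrite Delta_0_dyad_1 by auto. reflexivity. Qed.

Lemma Pf_at_0 i : (i < n)%nat -> Pf i 0 = 0.
Proof. intros Hi. rewrite <- dyad_1_0, Pf_dyad_1 by (auto; lia). rewrite dyad_1_0. apply fsum_eq0. intros; ring. Qed.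

Lemma coef_Pf_0_le i m : (i < n)%nat -> (m <= 1)%nat -> Rabs (coef (Pf i) 0 m) <= 4 * w_incr_const * Kv * Kw.
Proof. intros Hi Hm. pose proof Kv_nonneg. pose proof Kw_nonneg. pose proof w_incr_const_ge1. pose proof ra_bounds. pose proof rb_bounds.
  assert (Hw : forall j k, (j < d)%nat -> (k < 2)%nat -> Rabs (w j (dyad 1 (S k)) - w j (dyad 1 k)) <= w_incr_const * Kw).
  { intros j k Hj Hk. eapply Rle_trans; [apply w_incr; auto|]. unfold Rdiv.
    rewrite <- (Rmult_1_r (w_incr_const * Kw)) at 2. apply Rmult_le_compat_l; [nra|].
    simpl. rewrite Rmult_1_r, <- Rinv_1. apply Rinv_le_contravar; lra. }
  assert (Hv : fsum d (fun j => Rabs (v i j 0)) <= ra * Kv) by apply (v_family i Hi).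
  assert (Hcoef : exists s : R, (s = 1 \/ s = -1) /\ coef (Pf i) 0 m =
    fsum d (fun j => v i j 0 * (s * (w j (dyad 1 2) - w j (dyad 1 1)) + (w j (dyad 1 1) - w j (dyad 1 0))))).
  { assert (E2 : Pf i 1 = Pf i (dyad 1 2)) by (rewrite dyad_1_2; auto).
    destruct m as [|[|m]]; [exists 1| exists (-1)|lia]; (split; [lra|]); unfold coef.
    - rewrite E2, Pf_dyad_1, Pf_at_0, dyad_1_0, Rminus_0_r by (auto; lia). apply fsum_ext; intros; ring.
    - rewrite t0_01, t1_01, t2_01, E2, <- dyad_1_1, !Pf_dyad_1, Pf_at_0, dyad_1_0 by (auto; lia).
      rewrite Rminus_0_r, <- fsum_scal, <- fsum_minus. apply fsum_ext; intros; ring. }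
  destruct Hcoef as [s [Hs ->]].
  assert (Hsum : Rabs (fsum d (fun j => v i j 0 * (s * (w j (dyad 1 2) - w j (dyad 1 1)) + (w j (dyad 1 1) - w j (dyad 1 0)))))
    <= ra * Kv * (2 * (w_incr_const * Kw))).
  { apply fsum_abs_mul_bound; auto; [|nra].
    intros j Hj. eapply Rle_trans; [apply Rabs_triang|]. rewrite Rabs_mult.
    pose proof (Hw j 1%nat Hj ltac:(lia)). pose proof (Hw j 0%nat Hj ltac:(lia)).
    assert (Rabs s = 1) by (destruct Hs as [->| ->]; destruct_Rabs). nra. }
  assert (0 <= w_incr_const * Kv * Kw) by (apply Rmult_le_pos; [apply Rmult_le_pos|]; lra).
  replace (ra * Kv * (2 * (w_incr_const * Kw))) with (2 * ra * (w_incr_const * Kv * Kw)) in Hsum by ring. nra. Qed.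

Lemma Ppart_second_diff i q m : (m < 2 ^ q)%nat ->
  2 * Ppart d v w q i (dyad (S q) (S (2 * m))) - Ppart d v w q i (dyad (S q) (2 * m)) - Ppart d v w q i (dyad (S q) (S (S (2 * m))))
  = fsum q (fun p => fsum d (fun j => - / 2 * ((SS (v i j) p (dyad q (S m)) - SS (v i j) p (dyad q m)) *
        (Delta (w j) p (dyad q (S m)) - Delta (w j) p (dyad q m))))).
Proof. intros Hm. replace (S (S (2 * m))) with (2 * S m)%nat by lia. rewrite (dyad_double q m), (dyad_double q (S m)).
  unfold Ppart. rewrite fsum_second_diff. apply fsum_ext; intros p Hp. rewrite fsum_second_diff. apply fsum_ext; intros j Hj.
  assert (PA1 : pw_affine q (SS (v i j) p) (dSS (v i j) p)) by (apply pw_affine_SS; lia).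
  assert (PA2 : pw_affine q (Delta (w j) p) (dDelta (w j) p)) by (apply pw_affine_Delta; lia).
  rewrite (pw_affine_mid q _ _ m PA1 Hm), (pw_affine_mid q _ _ m PA2 Hm). field. Qed.

Definition Q_const := 2 / ((2 / ra - 1) * (4 * tau - 1)).

Lemma Q_const_pos : 0 < Q_const.
Proof. unfold Q_const. pose proof (ratio_gt1 ra ra_bounds). pose proof tau_bounds. apply Rdiv_lt_0_compat; nra. Qed.

Lemma SS_Delta_incr_prod_le i p x y : (i < n)%nat ->
  Rabs (fsum d (fun j => (SS (v i j) p y - SS (v i j) p x) * (Delta (w j) p y - Delta (w j) p x)))
  <= 4 * Kv * Kw / (2 / ra - 1) * Rabs (y - x) ^ 2 * (4 * tau) ^ p.
Proof. intros Hi. pose proof Kv_nonneg. pose proof Kw_nonneg. pose proof ra_bounds. pose proof rb_bounds.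
  pose proof (ratio_gt1 ra ra_bounds). pose proof (Rabs_pos (y - x)). pose proof (pow2_pos p).
  eapply Rle_trans.
  { apply fsum_abs_mul_bound.
    - apply (rowsum_SS_sub_le ra ra_bounds d (v i) Kv p); auto. intros; apply (v_family i Hi).
    - intros j Hj. apply Delta_sub_le; [apply w_coef; auto|apply (div_pow_nonneg rb rb_bounds); auto].
    - apply Rmult_le_pos; [apply (div_pow_nonneg rb rb_bounds); auto|]. apply Rmult_le_pos; lra. }
  right. unfold tau, Rdiv. rewrite !Rpow_mult_distr, !pow_inv, Rpow_mult_distr.
  replace (4 ^ p) with (2 ^ p * 2 ^ p) by (rewrite <- Rpow_mult_distr; f_equal; ring).
  field. repeat split; try apply pow_nonzero; lra. Qed.

Lemma Ppart_second_diff_le i q m : (i < n)%nat -> (m < 2 ^ q)%nat ->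
  Rabs (2 * Ppart d v w q i (dyad (S q) (S (2 * m))) - Ppart d v w q i (dyad (S q) (2 * m))
        - Ppart d v w q i (dyad (S q) (S (S (2 * m))))) <= Q_const * (Kv * Kw) * tau ^ q.
Proof. intros Hi Hm. rewrite Ppart_second_diff by auto.
  pose proof Kv_nonneg. pose proof Kw_nonneg. pose proof ra_bounds. pose proof tau_bounds.
  pose proof (ratio_gt1 ra ra_bounds). pose proof (pow2_pos q).
  assert (Hd : Rabs (dyad q (S m) - dyad q m) = / 2 ^ q).
  { rewrite dyad_succ. replace (dyad q m + / 2 ^ q - dyad q m) with (/ 2 ^ q) by ring.
    apply Rabs_right. left; apply Rinv_0_lt_compat; lra. }
  set (G := 2 * Kv * Kw / (2 / ra - 1) * (/ 2 ^ q) ^ 2).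
  assert (0 <= G).
  { unfold G, Rdiv. apply Rmult_le_pos; [|apply pow2_ge_0].
    apply Rmult_le_pos; [nra|left; apply Rinv_0_lt_compat; lra]. }
  eapply Rle_trans; [apply fsum_abs_le|].
  eapply Rle_trans.
  { apply (fsum_le _ _ (fun p => G * (4 * tau) ^ p)). intros p Hp.
    rewrite fsum_scal, Rabs_mult, Rabs_Ropp, (Rabs_right (/ 2)) by lra.
    eapply Rle_trans; [apply Rmult_le_compat_l; [lra|apply SS_Delta_incr_prod_le; auto]|].
    rewrite Hd. right. unfold G. field. lra. }
  rewrite fsum_scal. pose proof (fsum_geom_gt1 q (4 * tau) ltac:(lra)).
  eapply Rle_trans; [apply Rmult_le_compat_l; [auto|eassumption]|].
  right. unfold G, Q_const. rewrite Rpow_mult_distr, pow_inv.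
  replace (4 ^ q) with (2 ^ q * 2 ^ q) by (rewrite <- Rpow_mult_distr; f_equal; ring).
  field. repeat split; try apply pow_nonzero; lra. Qed.

Lemma level_term_second_diff i q m : (1 <= q)%nat -> (m < 2 ^ q)%nat ->
  let y0 := dyad (S q) (2 * m) in let y1 := dyad (S q) (S (2 * m)) in let y2 := dyad (S q) (S (S (2 * m))) in
  2 * fsum d (fun j => SS (v i j) q y1 * Delta (w j) q y1) - fsum d (fun j => SS (v i j) q y0 * Delta (w j) q y0)
    - fsum d (fun j => SS (v i j) q y2 * Delta (w j) q y2)
  = fsum d (fun j => (v i j y0 + v i j y2) / 2 * (2 * w j y1 - w j y0 - w j y2)).
Proof. intros Hq Hm y0 y1 y2.
  assert (Y0 : y0 = dyad q m) by apply dyad_double.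
  assert (Y2 : y2 = dyad q (S m)) by (unfold y2; replace (S (S (2 * m))) with (2 * S m)%nat by lia; apply dyad_double).
  assert (Y1 : y1 = t1 q (S m)) by (symmetry; apply t1_S_dyad).
  rewrite fsum_second_diff. apply fsum_ext; intros j Hj.
  assert (PA : pw_affine q (SS (v i j) q) (dSS (v i j) q)) by (apply pw_affine_SS; lia).
  assert (Hmid : SS (v i j) q y1 = (SS (v i j) q y0 + SS (v i j) q y2) / 2).
  { rewrite Y0, Y2. apply (pw_affine_mid q _ _ m PA Hm). }
  rewrite Hmid, Y1, Delta_t1 by lia. rewrite Y0, Y2, !Delta_coarse_dyad, !SS_dyad by lia.
  unfold coef. rewrite <- Y1, <- Y0, <- Y2. change (t2 q (S m)) with (dyad q (S m)). rewrite <- Y2.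
  change (t0 q (S m)) with (dyad q (S m - 1)). rewrite Nat.sub_succ, Nat.sub_0_r, <- Y0. field. Qed.

Lemma J_second_diff i q m : (i < n)%nat -> (1 <= q)%nat -> (m < 2 ^ q)%nat ->
  let y0 := dyad (S q) (2 * m) in let y1 := dyad (S q) (S (2 * m)) in let y2 := dyad (S q) (S (S (2 * m))) in
  2 * J i y1 - J i y0 - J i y2 =
  (I i y1 - I i y0 - trapezoid i y0 y1) - (I i y2 - I i y1 - trapezoid i y1 y2)
  - / 2 * (fsum d (fun j => (v i j y1 - v i j y0) * (w j y2 - w j y1)) + fsum d (fun j => (v i j y2 - v i j y1) * (w j y1 - w j y0)))
  - (2 * Ppart d v w q i y1 - Ppart d v w q i y0 - Ppart d v w q i y2).
Proof. intros Hi Hq Hm y0 y1 y2.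
  pose proof (level_term_second_diff i q m Hq Hm) as E. cbv zeta in E. fold y0 y1 y2 in E.
  assert (T : trapezoid i y0 y1 - trapezoid i y1 y2 - fsum d (fun j => (v i j y0 + v i j y2) / 2 * (2 * w j y1 - w j y0 - w j y2))
    = - / 2 * (fsum d (fun j => (v i j y1 - v i j y0) * (w j y2 - w j y1)) + fsum d (fun j => (v i j y2 - v i j y1) * (w j y1 - w j y0)))).
  { unfold trapezoid. rewrite <- fsum_plus, <- !fsum_minus, <- fsum_scal. apply fsum_ext; intros; field. }
  unfold J, y0, y1, y2. rewrite !(Pf_dyad q i) by (auto; simpl; lia). fold y0 y1 y2. rewrite !Ppart_succ. lra. Qed.

Definition J_interior_const := 2 * defect_const + v_incr_const * w_incr_const + Q_const.
Definition J_const := J_interior_const + I_const + 4 * w_incr_const.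

Lemma coef_J_le_interior i q m : (i < n)%nat -> (1 <= q)%nat -> (m < 2 ^ q)%nat ->
  Rabs (coef (J i) q (S m)) <= J_interior_const * (Kv * Kw) * tau ^ q.
Proof. intros Hi Hq Hm. unfold coef. rewrite (t0_S_dyad q m), (t1_S_dyad q m), (t2_S_dyad q m).
  pose proof (J_second_diff i q m Hi Hq Hm) as E. cbv zeta in E. rewrite E. clear E.
  pose proof (I_trapezoid_defect_le i (S q) (2 * m) Hi ltac:(simpl; lia)) as A1.
  pose proof (I_trapezoid_defect_le i (S q) (S (2 * m)) Hi ltac:(simpl; lia)) as A2.
  pose proof (incr_prod_le i (S q) (2 * m) (S (2 * m)) Hi ltac:(simpl; lia) ltac:(simpl; lia)) as B1.
  pose proof (incr_prod_le i (S q) (S (2 * m)) (2 * m) Hi ltac:(simpl; lia) ltac:(simpl; lia)) as B2.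
  pose proof (Ppart_second_diff_le i q m Hi Hm) as BQ.
  assert (Hdef : defect_bound * tau ^ S q <= defect_const * (Kv * Kw * tau ^ q)).
  { unfold defect_bound. replace (defect_const * (Kv * Kw * tau ^ q)) with (defect_const * Kv * Kw * tau ^ q) by ring.
    apply Rmult_le_compat_l; [apply defect_bound_nonneg|apply tau_pow_succ_le]. }
  assert (Hsplit : split_const * tau ^ S q <= v_incr_const * w_incr_const * (Kv * Kw * tau ^ q)).
  { unfold split_const. replace (v_incr_const * w_incr_const * (Kv * Kw * tau ^ q)) with (v_incr_const * w_incr_const * Kv * Kw * tau ^ q) by ring.
    pose proof v_incr_const_ge1. pose proof w_incr_const_ge1. pose proof Kv_nonneg. pose proof Kw_nonneg.
    apply Rmult_le_compat_l; [apply Rmult_le_pos; [apply Rmult_le_pos|]; nra|apply tau_pow_succ_le]. }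
  replace (J_interior_const * (Kv * Kw) * tau ^ q) with
    (2 * (defect_const * (Kv * Kw * tau ^ q)) + v_incr_const * w_incr_const * (Kv * Kw * tau ^ q) + Q_const * (Kv * Kw) * tau ^ q)
    by (unfold J_interior_const; ring).
  match goal with |- Rabs (?a1 - ?a2 - / 2 * (?b1 + ?b2) - ?c) <= _ =>
    assert (Rabs (a1 - a2 - / 2 * (b1 + b2) - c) <= Rabs a1 + Rabs a2 + / 2 * (Rabs b1 + Rabs b2) + Rabs c) by destruct_Rabs end.
  lra. Qed.

Lemma J_interior_const_nonneg : 0 <= J_interior_const.
Proof. pose proof Q_const_pos. pose proof defect_const_nonneg. pose proof v_incr_const_ge1. pose proof w_incr_const_ge1.
  unfold J_interior_const. nra. Qed.

Lemma J_const_nonneg : 0 <= J_const.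
Proof. pose proof J_interior_const_nonneg. pose proof I_const_nonneg. pose proof w_incr_const_ge1. unfold J_const. lra. Qed.

Lemma coef_J_le i q m : (i < n)%nat -> (m <= 2 ^ q)%nat ->
  Rabs (coef (J i) q m) <= J_const * (Kv * Kw) * tau ^ q.
Proof. intros Hi Hm. pose proof Kv_nonneg. pose proof Kw_nonneg. pose proof tau_bounds.
  pose proof J_interior_const_nonneg. pose proof I_const_nonneg. pose proof w_incr_const_ge1.
  assert (0 <= Kv * Kw * tau ^ q) by (apply Rmult_le_pos; [nra|apply pow_le; lra]).
  destruct q as [|q].
  - simpl in Hm. unfold J. rewrite coef_sub. eapply Rle_trans; [apply Rabs_sub_le|].
    pose proof (coef_I_le i 0 m Hi Hm) as HIc. pose proof (coef_Pf_0_le i m Hi ltac:(lia)) as HPc.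
    simpl pow in *. unfold J_const. replace (I_const * Kv * Kw / 1) with (I_const * (Kv * Kw)) in HIc by field. nra.
  - destruct m as [|m].
    + unfold coef. rewrite Rabs_R0. replace (J_const * (Kv * Kw) * tau ^ S q) with (J_const * (Kv * Kw * tau ^ S q)) by ring.
      apply Rmult_le_pos; [apply J_const_nonneg|]. apply Rmult_le_pos; [nra|apply pow_le; lra].
    + eapply Rle_trans; [apply coef_J_le_interior; auto; lia|].
      assert (0 <= Kv * Kw * tau ^ S q) by (apply Rmult_le_pos; [nra|apply pow_le; lra]).
      replace (J_const * (Kv * Kw) * tau ^ S q) with (J_const * (Kv * Kw * tau ^ S q)) by ring.
      replace (J_interior_const * (Kv * Kw) * tau ^ S q) with (J_interior_const * (Kv * Kw * tau ^ S q)) by ring.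
      apply Rmult_le_compat_r; auto. unfold J_const. lra. Qed.

Lemma J_holder C : J_const <= C -> vec_holder n (a + b) J (C * Kv * Kw).
Proof. intros HC. pose proof Kv_nonneg. pose proof Kw_nonneg. pose proof J_const_nonneg. split.
  - rewrite vnorm_eq0 by (intros; unfold J; rewrite I_at_0, Pf_at_0 by auto; ring). rewrite Rmult_0_r.
    apply Rmult_le_pos; [apply Rmult_le_pos|]; lra.
  - intros p m Hm. rewrite Rpower2_INR_mul, Rpower_plus. fold ra rb. pose proof ra_bounds. pose proof rb_bounds.
    assert (0 < (ra * rb) ^ p) by (apply pow_lt; nra).
    assert (E : (ra * rb) ^ p * tau ^ p = 1).
    { unfold tau. rewrite pow_inv. field. apply pow_nonzero. nra. }
    apply (Rmult_le_reg_r (tau ^ p)). apply pow_lt, tau_bounds.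
    rewrite Rmult_comm, <- Rmult_assoc, (Rmult_comm (tau ^ p)), E, Rmult_1_l.
    unfold vnorm. apply fmax_le. apply Rmult_le_pos. apply Rmult_le_pos; [apply Rmult_le_pos|]; lra. apply pow_le. pose proof tau_bounds; lra.
    intros i Hi. eapply Rle_trans. apply coef_J_le; auto.
    apply Rmult_le_compat_r. apply pow_le. pose proof tau_bounds; lra.
    rewrite Rmult_assoc. apply Rmult_le_compat_r; [apply Rmult_le_pos; lra| lra]. Qed.
End Estimates.

Theorem mainTheorem9 (alpha beta : R)
  (Ha : 0 < alpha < 1) (Hb : 0 < beta < 1) (Hab : alpha + beta > 1) :
  exists C : R, 0 < C /\
  forall (n d : nat) (v : nat -> nat -> R -> R) (w : nat -> R -> R),
    mat_cont01 n d v -> vec_cont01 d w ->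
    (exists K, mat_holder n d alpha v K) ->
    (exists K, vec_holder d beta w K) ->
    exists I Lf Sf Pf : nat -> R -> R,
      unif_cv01 n (fun N => Iapprox d v w N) I /\
      pw_cv01 n (fun P => Lpart d v w P) Lf /\
      pw_cv01 n (fun P => Spart d v w P) Sf /\
      pw_cv01 n (fun P => Ppart d v w P) Pf /\
      (forall i t, (i < n)%nat -> 0 <= t <= 1 -> I i t = Lf i t + Sf i t + Pf i t) /\
      vec_cont01 n I /\
      vec_cont01 n (fun i t => I i t - Pf i t) /\
      (forall Kv Kw, mat_holder n d alpha v Kv -> vec_holder d beta w Kw ->
         vec_holder n beta I (C * Kv * Kw) /\
         vec_holder n (alpha + beta) (fun i t => I i t - Pf i t) (C * Kv * Kw)).
Proof.
  apply Rgt_lt in Hab.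
  pose proof (I_const_nonneg alpha beta Ha Hb Hab). pose proof (J_const_nonneg alpha beta Ha Hb Hab).
  exists (I_const alpha beta + J_const alpha beta + 1). split; [lra|].
  intros n d v w _ _ [K1 HK1] [K2 HK2].
  destruct (Iapprox_unif_cv alpha beta n d v w K1 K2 Ha Hb Hab HK1 HK2)
    as (I & Lf & Sf & Pf & HI & HL & HS & HP & Hsum & HcontI & HcontJ).
  exists I, Lf, Sf, Pf. do 7 (split; [assumption|]).
  intros Kv Kw HV HW. pose proof (unif_cv01_pw _ _ _ HI) as HIpw. split.
  - apply (I_holder alpha beta n d v w Kv Kw Ha Hb Hab HV HW I HIpw); lra.
  - apply (J_holder alpha beta n d v w Kv Kw Ha Hb Hab HV HW I HIpw Pf HP); lra.
Qed.
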